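(* Let $h:[0,1]\to(0,\infty)$ and $f:[0,\infty)\to[0,\infty)$ be continuously differentiable, suppose there is $t_0\ge0$ with $f>0$ on $[t_0,\infty)$ and $f\in C^2([t_0,\infty))$, put $g=\log f$ on $[t_0,\infty)$, and assume condition (H1) of the context. Let $(\lambda_n,\mu_n,u_n)\in(0,\infty)\times(0,\infty)\times C^2([0,1])$ satisfy $-u_n''-\frac1r u_n'=\lambda_n h(r)f(u_n)$, $u_n>0$ in $(0,1)$, $u_n(0)=\mu_n$, $u_n'(0)=0=u_n(1)$, with $\mu_n\to\infty$. Define $\gamma_{0,n}>0$ by $\lambda_n h(0)f'(\mu_n)\gamma_{0,n}^2=1$, and for $r\in[0,1]$ with $u_n(r)\ge t_0$ let $$\phi_n(r)=\lambda_n r^2 h(r)f'(u_n(r)),\qquad \psi_n(r)=-r\,g'(u_n(r))\,u_n'(r).$$ Then, up to a subsequence, there exists $(r_{1,n})\subset(0,1)$ such that $\phi_n(r_{1,n})$ is a local maximum value of $\phi_n$ (in particular $\phi_n'(r_{1,n})=0$) for all $n$, and as $n\to\infty$: $\phi_n(r_{1,n})\to2$, $\psi_n(r_{1,n})\to2$, $r_{1,n}/\gamma_{0,n}\to2\sqrt2$, $$u_n(r_{1,n})=\mu_n+O\Big(\frac1{g(\mu_n)}\Big)\frac{g(\mu_n)}{g'(\mu_n)},$$ $g(u_n(r_{1,n}))/g(\mu_n)\to1$ and $g'(u_n(r_{1,n}))/g'(\mu_n)\to1$.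
   Context: Condition (H1): (i) $g'(t)>0$ and $g''(t)>0$ for all $t\ge t_0$, and there is a pair $(q,p)$ with either $q=1$ and $p\in(0,\infty]$, or $q\in(1,\infty)$ and $p\in(0,\infty)$, such that $\lim_{t\to\infty}\frac{g'(t)^2}{g(t)g''(t)}=q$ and $\lim_{t\to\infty}\frac{tg'(t)}{g(t)}=p$; (ii) if $q=1$, then $tg'(t)/g(t)$ is nondecreasing on $[t_0,\infty)$ and there exist $k\in\mathbb{N}$ and $\hat g\in C^2([t_0,\infty))$ with $f=\exp_k\circ\hat g$ and $\hat g'/\hat g$ nonincreasing on $[t_0,\infty)$ ($\exp_1=\exp$, $\exp_k=\exp_{k-1}\circ\exp$). *)

From Stdlib Require Import Reals Lra.
From Coquelicot Require Import Coquelicot.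
Open Scope R_scope.

Definition deriv_within (D : R -> Prop) (F F' : R -> R) : Prop :=
  forall x, D x ->
    filterlim (fun y => (F y - F x) / (y - x))
      (within (fun y => D y /\ y <> x) (locally x)) (locally (F' x)).

Definition continuous_within (D : R -> Prop) (F : R -> R) : Prop :=
  forall x, D x -> filterlim F (within D (locally x)) (locally (F x)).

Definition C1_with (D : R -> Prop) (F F1 : R -> R) : Prop :=
  deriv_within D F F1 /\ continuous_within D F1.

Definition C2_with (D : R -> Prop) (F F1 F2 : R -> R) : Prop :=
  deriv_within D F F1 /\ deriv_within D F1 F2 /\ continuous_within D F2.

Definition exp_iter (k : nat) : R -> R := Nat.iter k exp.

Definition Icc (a b : R) : R -> Prop := fun x => a <= x <= b.
Definition Ici (a : R) : R -> Prop := fun x => a <= x.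

(* Put [Lam = lambda h(0) f'(mu)] (so that [gamma_0 = Lam^(-1/2)]), [phi = lambda r^2 h f'(u)],
   [psi = -r g'(u) u'] and [y = 1 - psi / 4]. In divergence form [(r u')' = -r lambda h f(u) <= 0],
   which gives [u <= mu] and, for [r <= 4 gamma_0], the a priori bounds [psi <= 0.55 Lam r^2] and
   [mu - u <= 5 / g'(mu)]; as [u(1) = 0] also forces [mu <= lambda (sup h) f(mu) / 4], [Lam -> oo].
   Since [g'' <= eps g'^2] near [mu] (this is where [q >= 1] enters), [g'] changes by a factor at
   most [e^(5 eps)] on this scale.
   For the Liouville bubble [phi = 8 y (1 - y)] and [h f'(u) / (h(0) f'(mu)) = y^2]. The defects of
   these two identities vanish at [r = 0] and their derivatives carry a factor [g''/g'^2], [h'] or a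
   defect, so they are [O(eps + gamma_0)] for [r <= 4 gamma_0]. Eliminating [y],
   [phi ~ 64 rho^2 / (8 + rho^2)^2] with [rho = r / gamma_0]; this profile equals [16/9] at [rho = 2]
   and [rho = 4] and has its maximum [2] at [rho = sqrt 8]. Hence the maximum point [r_1] of [phi] on
   [[2 gamma_0, 4 gamma_0]] is interior, [phi(r_1) -> 2], so [y(r_1) -> 1/2], i.e. [psi(r_1) -> 2],
   and [r_1 / gamma_0 -> sqrt 8]. *)

From Stdlib Require Import Reals Lra Lia ClassicalEpsilon.
From Coquelicot Require Import Coquelicot.
Open Scope R_scope.

Lemma ball_Rabs (x e y : R) : ball x e y <-> Rabs (y - x) < e.
Proof. apply iff_refl. Qed.

Lemma exp_le_mono x y : x <= y -> exp x <= exp y.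
Proof. intros [H|H]; [left; apply exp_increasing; auto | subst; lra]. Qed.

Lemma ln_le_mono x y : 0 < x -> x <= y -> ln x <= ln y.
Proof. intros Hx [H|H]; [left; apply ln_increasing; auto | subst; lra]. Qed.

Lemma exp_5_le : exp 5 <= 243.
Proof.
  replace 5 with (1 + 1 + 1 + 1 + 1) by ring. rewrite !exp_plus.
  pose proof exp_le_3. pose proof (exp_pos 1).
  assert (exp 1 * exp 1 <= 9) by nra.
  assert (exp 1 * exp 1 * exp 1 <= 27) by nra.
  assert (exp 1 * exp 1 * exp 1 * exp 1 <= 81) by nra. nra.
Qed.

Lemma sqrt_gt_of_sqr_lt K x : 0 < K -> K ^ 2 < x -> K < sqrt x.
Proof.
  intros HK Hx. rewrite <- (sqrt_pow2 K) by lra.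
  apply sqrt_lt_1_alt. split; [apply pow2_ge_0 | exact Hx].
Qed.

Lemma Rabs_sqrt_sub_le x a : 0 <= x -> 0 < a -> Rabs (sqrt x - sqrt a) <= Rabs (x - a) / sqrt a.
Proof.
  intros Hx Ha. pose proof (sqrt_lt_R0 a Ha). pose proof (sqrt_pos x).
  replace (sqrt x - sqrt a) with ((x - a) / (sqrt x + sqrt a)).
  2: { assert (sqrt x * sqrt x = x) by (apply sqrt_sqrt; lra).
       assert (sqrt a * sqrt a = a) by (apply sqrt_sqrt; lra).
       field_simplify_eq; [|lra]. nra. }
  unfold Rdiv. rewrite Rabs_mult, Rabs_inv, (Rabs_pos_eq (sqrt x + sqrt a)) by lra.
  apply Rmult_le_compat_l; [apply Rabs_pos | apply Rinv_le_contravar; lra].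
Qed.

Lemma is_lim_seq_of_close (a : nat -> R) (l : R) :
  (forall z, 0 < z <= 1 -> eventually (fun n => Rabs (a n - l) < z)) -> is_lim_seq a l.
Proof.
  intros H. apply is_lim_seq_spec. intros e.
  destruct (H (Rmin e 1)) as [N HN].
  { split; [apply Rmin_pos; [apply cond_pos | lra] | apply Rmin_r]. }
  exists N. intros n Hn. pose proof (Rmin_l e 1). specialize (HN n Hn). lra.
Qed.

Lemma is_derive_eq (f : R -> R) (x l l' : R) : is_derive f x l -> l = l' -> is_derive f x l'.
Proof. intros H <-; exact H. Qed.

Lemma is_derive_continuity_pt (f : R -> R) x l : is_derive f x l -> continuity_pt f x.
Proof.
  intros H. apply continuity_pt_filterlim.
  apply (ex_derive_continuous (K := R_AbsRing) (V := R_NormedModule)). exists l; exact H.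
Qed.

Lemma is_derive_Rplus (f g : R -> R) x df dg : is_derive f x df -> is_derive g x dg ->
  is_derive (fun y => f y + g y) x (df + dg).
Proof. intros. apply (is_derive_plus f g); auto. Qed.

Lemma is_derive_Rminus (f g : R -> R) x df dg : is_derive f x df -> is_derive g x dg ->
  is_derive (fun y => f y - g y) x (df - dg).
Proof. intros. apply (is_derive_minus f g); auto. Qed.

Lemma is_derive_Rmult (f g : R -> R) x df dg : is_derive f x df -> is_derive g x dg ->
  is_derive (fun y => f y * g y) x (df * g x + f x * dg).
Proof. intros. apply (is_derive_mult f g); auto. intros; apply Rmult_comm. Qed.

Lemma is_derive_Ropp (f : R -> R) x df : is_derive f x df -> is_derive (fun y => - f y) x (- df).
Proof. intros. apply (is_derive_opp f); auto. Qed.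

Lemma is_derive_Rscal (f : R -> R) x k df : is_derive f x df ->
  is_derive (fun y => k * f y) x (k * df).
Proof. intros. apply is_derive_scal; auto. Qed.

Lemma is_derive_Rcomp (f g : R -> R) x df dg : is_derive f (g x) df -> is_derive g x dg ->
  is_derive (fun y => f (g y)) x (dg * df).
Proof. intros. apply (is_derive_comp f g); auto. Qed.

Lemma is_derive_Rid x : is_derive (fun y : R => y) x 1.
Proof. apply (is_derive_id (K := R_AbsRing)). Qed.

Lemma is_derive_Rconst (c : R) x : is_derive (fun _ : R => c) x 0.
Proof. apply (is_derive_const (K := R_AbsRing) (V := R_NormedModule)). Qed.

Lemma is_derive_Rsqr (f : R -> R) x df : is_derive f x df ->
  is_derive (fun y => f y ^ 2) x (2 * f x * df).
Proof. intros. eapply is_derive_eq. apply (is_derive_pow f 2); eauto. simpl. ring. Qed.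

Lemma is_derive_Rln (f : R -> R) x df : is_derive f x df -> 0 < f x ->
  is_derive (fun y => ln (f y)) x (df / f x).
Proof.
  intros. eapply is_derive_eq. apply is_derive_Rcomp. apply is_derive_ln. auto. eauto.
  field. lra.
Qed.

Lemma is_derive_Rexp (f : R -> R) x df : is_derive f x df ->
  is_derive (fun y => exp (f y)) x (df * exp (f x)).
Proof. intros. apply is_derive_Rcomp; auto. apply is_derive_exp. Qed.

Lemma derive_max_eq_0 (F : R -> R) a b c l : a < c < b -> is_derive F c l ->
  (forall x, a < x < b -> F x <= F c) -> l = 0.
Proof.
  intros Hc Hd Hmax. apply is_derive_Reals in Hd.
  pose (pr := exist (fun l => derivable_pt_lim F c l) l Hd : derivable_pt F c).
  change l with (derive_pt F c pr).
  apply (deriv_maximum F a b c pr); try lra. intros x H1 H2; apply Hmax; lra.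
Qed.

Lemma nondecreasing_of_derive_nonneg (F F' : R -> R) a b : a <= b ->
  (forall x, a <= x <= b -> is_derive F x (F' x) /\ 0 <= F' x) -> F a <= F b.
Proof.
  intros Hab HD. destruct (Req_dec a b) as [->|Hne]; [lra|].
  destruct (MVT_gen F a b F') as [c [Hc Heq]];
    rewrite ?Rmin_left, ?Rmax_right in * by lra.
  - intros x Hx. apply HD; lra.
  - intros x Hx. apply is_derive_continuity_pt with (F' x). apply HD; lra.
  - destruct (HD c Hc) as [_ Hp]. nra.
Qed.

Lemma ge_of_nondecreasing_from_0 (G G' : R -> R) r L0 : 0 < r ->
  (forall t, 0 < t <= r -> is_derive G t (G' t) /\ 0 <= G' t) ->
  (forall e, 0 < e -> exists d, 0 < d /\ forall t, 0 < t < d -> L0 - e <= G t) ->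
  L0 <= G r.
Proof.
  intros Hr HD Hlim. apply Rle_plus_epsilon. intros e He.
  destruct (Hlim e He) as [d [Hd Hd']].
  set (t := Rmin d r / 2).
  assert (Ht : 0 < t < d /\ t <= r).
  { unfold t. pose proof (Rmin_l d r). pose proof (Rmin_r d r).
    assert (0 < Rmin d r) by (apply Rmin_pos; lra). lra. }
  assert (G t <= G r).
  { apply (nondecreasing_of_derive_nonneg G G'). lra. intros x Hx. apply HD. lra. }
  specialize (Hd' t (proj1 Ht)). lra.
Qed.

Lemma le_of_derive_le (F F' : R -> R) a b r0 : 0 <= a -> 0 <= b ->
  (forall r, 0 < r <= r0 -> is_derive F r (F' r) /\ F' r <= 2 * a * r + b) ->
  (forall e, 0 < e -> exists d, 0 < d /\ forall t, 0 < t < d -> F t <= e) ->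
  forall r, 0 < r <= r0 -> F r <= a * r ^ 2 + b * r.
Proof.
  intros Ha Hb HD Hlim r Hr.
  assert (0 <= a * r ^ 2 + b * r - F r); [|lra].
  apply (ge_of_nondecreasing_from_0 (fun t => a * t ^ 2 + b * t - F t)
           (fun t => 2 * a * t + b - F' t) r 0); [lra| |].
  - intros t Ht. destruct (HD t ltac:(lra)) as [D1 D2]. split; [|lra].
    eapply is_derive_eq.
    + apply is_derive_Rminus; [apply is_derive_Rplus | exact D1].
      * apply is_derive_Rscal, is_derive_Rsqr, is_derive_Rid.
      * apply is_derive_Rscal, is_derive_Rid.
    + cbv beta. ring.
  - intros e He. destruct (Hlim e He) as [d [Hd Hd']]. exists d. split; [exact Hd|].
    intros t Ht. specialize (Hd' t Ht).
    assert (0 <= a * t ^ 2) by (apply Rmult_le_pos; [lra | apply pow2_ge_0]).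
    assert (0 <= b * t) by (apply Rmult_le_pos; lra). lra.
Qed.

Lemma Rabs_le_of_derive_le (F F' : R -> R) a b r0 : 0 <= a -> 0 <= b ->
  (forall r, 0 < r <= r0 -> is_derive F r (F' r) /\ Rabs (F' r) <= 2 * a * r + b) ->
  (forall e, 0 < e -> exists d, 0 < d /\ forall t, 0 < t < d -> Rabs (F t) <= e) ->
  forall r, 0 < r <= r0 -> Rabs (F r) <= a * r ^ 2 + b * r.
Proof.
  intros Ha Hb HD Hlim r Hr. apply Rabs_le.
  assert (F r <= a * r ^ 2 + b * r).
  { apply (le_of_derive_le F F' a b r0); auto.
    - intros t Ht. destruct (HD t Ht) as [D1 D2]. apply Rabs_le_between in D2. split; [exact D1 | lra].
    - intros e He. destruct (Hlim e He) as [d [Hd Hd']]. exists d. split; [exact Hd|].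
      intros t Ht. specialize (Hd' t Ht). apply Rabs_le_between in Hd'. lra. }
  assert (- F r <= a * r ^ 2 + b * r).
  { apply (le_of_derive_le (fun t => - F t) (fun t => - F' t) a b r0); auto.
    - intros t Ht. destruct (HD t Ht) as [D1 D2]. apply Rabs_le_between in D2.
      split; [apply is_derive_Ropp, D1 | lra].
    - intros e He. destruct (Hlim e He) as [d [Hd Hd']]. exists d. split; [exact Hd|].
      intros t Ht. specialize (Hd' t Ht). apply Rabs_le_between in Hd'. lra. }
  lra.
Qed.

Lemma is_derive_eps_delta (F : R -> R) x l : is_derive F x l ->
  forall e, 0 < e -> exists d, 0 < d /\ forall y, Rabs (y - x) < d -> Rabs (F y - F x) < e.
Proof.
  intros H e He. apply is_derive_continuity_pt, continuity_pt_filterlim in H.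
  apply (proj1 (filterlim_locally _ _)) with (eps := mkposreal e He) in H.
  destruct H as [d Hd]. exists d. split; [apply cond_pos|]. intros y Hy. apply (Hd y). exact Hy.
Qed.

Lemma deriv_within_is_derive D (F F' : R -> R) a b x : deriv_within D F F' ->
  (forall y, a < y < b -> D y) -> a < x < b -> is_derive F x (F' x).
Proof.
  intros HD HDab Hx. apply is_derive_Reals. intros e He.
  specialize (HD x (HDab x Hx)).
  apply (proj1 (filterlim_locally _ _)) with (eps := mkposreal e He) in HD.
  destruct HD as [d Hd].
  assert (Hd' : 0 < Rmin d (Rmin (x - a) (b - x))).
  { apply Rmin_pos; [apply cond_pos | apply Rmin_pos; lra]. }
  exists (mkposreal _ Hd'). intros k Hk0 Hk. simpl in Hk.
  pose proof (Rmin_l d (Rmin (x - a) (b - x))). pose proof (Rmin_r d (Rmin (x - a) (b - x))).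
  pose proof (Rmin_l (x - a) (b - x)). pose proof (Rmin_r (x - a) (b - x)).
  apply Rabs_def2 in Hk as Hk'.
  assert (Hb : ball x d (x + k)) by (apply ball_Rabs; replace (x + k - x) with k by ring; lra).
  assert (HDk : D (x + k) /\ x + k <> x) by (split; [apply HDab | ]; lra).
  specialize (Hd (x + k) Hb HDk).
  apply ball_Rabs in Hd. replace (x + k - x) with k in Hd by ring. exact Hd.
Qed.

Lemma deriv_within_Ici_is_derive t0 (F F' : R -> R) x : deriv_within (Ici t0) F F' ->
  t0 < x -> is_derive F x (F' x).
Proof.
  intros H Hx. apply (deriv_within_is_derive (Ici t0) F F' t0 (x + 1)); auto.
  - intros; unfold Ici; lra.
  - lra.
Qed.

Lemma deriv_within_Icc_is_derive (F F' : R -> R) x : deriv_within (Icc 0 1) F F' ->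
  0 < x < 1 -> is_derive F x (F' x).
Proof.
  intros H Hx. apply (deriv_within_is_derive (Icc 0 1) F F' 0 1); auto.
  intros; unfold Icc; lra.
Qed.

Lemma deriv_within_eps_delta D (F F' : R -> R) x : deriv_within D F F' -> D x ->
  forall e, 0 < e -> exists d, 0 < d /\
    forall y, D y -> Rabs (y - x) < d -> Rabs (F y - F x) < e.
Proof.
  intros HD Hx e He. specialize (HD x Hx).
  apply (proj1 (filterlim_locally _ _)) with (eps := mkposreal 1 Rlt_0_1) in HD.
  destruct HD as [d Hd].
  set (K := Rabs (F' x) + 1).
  assert (HK : 0 < K) by (unfold K; pose proof (Rabs_pos (F' x)); lra).
  exists (Rmin d (e / K)). split.
  { apply Rmin_pos; [apply cond_pos | apply Rdiv_lt_0_compat; lra]. }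
  intros y Hy Hyx.
  destruct (Req_dec y x) as [->|Hne].
  { replace (F x - F x) with 0 by ring; rewrite Rabs_R0; lra. }
  pose proof (Rmin_l d (e / K)). pose proof (Rmin_r d (e / K)).
  assert (Hb : ball x d y) by (apply ball_Rabs; lra).
  assert (Hd1 : Rabs ((F y - F x) / (y - x) - F' x) < 1) by exact (Hd y Hb (conj Hy Hne)).
  assert (Hq : Rabs ((F y - F x) / (y - x)) <= K).
  { unfold K. replace ((F y - F x) / (y - x)) with (((F y - F x) / (y - x) - F' x) + F' x) by ring.
    eapply Rle_trans; [apply Rabs_triang | lra]. }
  replace (F y - F x) with ((F y - F x) / (y - x) * (y - x)) by (field; lra).
  rewrite Rabs_mult. pose proof (Rabs_pos (y - x)).
  apply Rle_lt_trans with (K * Rabs (y - x)); [apply Rmult_le_compat_r; auto|].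
  apply Rlt_le_trans with (K * (e / K)); [apply Rmult_lt_compat_l; lra | right; field; lra].
Qed.

Lemma continuous_within_eps_delta D (F : R -> R) x : continuous_within D F -> D x ->
  forall e, 0 < e -> exists d, 0 < d /\
    forall y, D y -> Rabs (y - x) < d -> Rabs (F y - F x) < e.
Proof.
  intros HC Hx e He. specialize (HC x Hx).
  apply (proj1 (filterlim_locally _ _)) with (eps := mkposreal e He) in HC.
  destruct HC as [d Hd]. exists d. split; [apply cond_pos|].
  intros y Hy Hyx. apply ball_Rabs in Hyx. apply ball_Rabs, (Hd y Hyx Hy).
Qed.

Lemma continuous_within_Ici_continuity_pt (F : R -> R) x : continuous_within (Ici 0) F ->
  0 < x -> continuity_pt F x.
Proof.
  intros HC Hx. apply continuity_pt_filterlim, filterlim_locally. intros eps.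
  destruct (continuous_within_eps_delta (Ici 0) F x HC ltac:(unfold Ici; lra) eps (cond_pos eps))
    as [d [Hd Hd']].
  assert (Hm : 0 < Rmin d x) by (apply Rmin_pos; lra).
  exists (mkposreal _ Hm). intros y Hy. apply ball_Rabs.
  assert (Hy' : Rabs (y - x) < Rmin d x) by exact Hy.
  pose proof (Rmin_l d x). pose proof (Rmin_r d x).
  apply Hd'; [unfold Ici; apply Rabs_def2 in Hy'; lra | lra].
Qed.

(* Composing with [clamp a b] turns continuity on [[a, b]] into continuity on all of [R]. *)
Definition clamp (a b x : R) := Rmax a (Rmin b x).

Lemma clamp_in a b x : a <= b -> a <= clamp a b x <= b.
Proof. intros H; unfold clamp, Rmax, Rmin; repeat destruct Rle_dec; lra. Qed.

Lemma clamp_lipschitz a b x y : a <= b -> Rabs (clamp a b x - clamp a b y) <= Rabs (x - y).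
Proof.
  intros H; unfold clamp, Rmax, Rmin; repeat destruct Rle_dec;
  unfold Rabs; repeat destruct Rcase_abs; lra.
Qed.

Lemma clamp_id a b x : a <= x <= b -> clamp a b x = x.
Proof. intros H; unfold clamp, Rmax, Rmin; repeat destruct Rle_dec; lra. Qed.

Lemma continuous_on_bounded_above (F : R -> R) a b : a <= b ->
  (forall x, a <= x <= b -> forall e, 0 < e -> exists d, 0 < d /\
      forall y, a <= y <= b -> Rabs (y - x) < d -> Rabs (F y - F x) < e) ->
  exists M, forall x, a <= x <= b -> F x <= M.
Proof.
  intros Hab HC.
  set (G := fun x => F (clamp a b x)).
  destruct (continuity_ab_maj G a b Hab) as [Mx [HM _]].
  - intros c Hc. apply continuity_pt_filterlim, filterlim_locally. intros eps.
    destruct (HC (clamp a b c) (clamp_in a b c Hab) eps (cond_pos eps)) as [d [Hd Hd']].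
    exists (mkposreal d Hd). intros y Hy. apply ball_Rabs in Hy. apply ball_Rabs.
    apply Hd'; [apply clamp_in; auto|].
    eapply Rle_lt_trans; [apply clamp_lipschitz; auto | exact Hy].
  - exists (G Mx). intros x Hx. specialize (HM x Hx). unfold G in HM.
    rewrite clamp_id in HM; auto.
Qed.

Definition max_on (F : R -> R) (a b r : R) : Prop :=
  a <= r <= b /\ forall x, a <= x <= b -> F x <= F r.

Lemma max_on_exists (F : R -> R) a b : a <= b ->
  (forall x, a <= x <= b -> continuity_pt F x) -> exists r, max_on F a b r.
Proof.
  intros Hab HF. destruct (continuity_ab_maj F a b Hab HF) as [r [Hr1 Hr2]].
  exists r. split; auto.
Qed.

Lemma local_max_of_interior_max (F G : R -> R) a b r c : max_on F a b r -> a < r < b ->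
  (forall x, a < x < b -> c <= G x) ->
  exists delta, 0 < delta /\ forall x, Rabs (x - r) < delta -> c <= G x /\ F x <= F r.
Proof.
  intros [_ Hmax] Hr HG. exists (Rmin (r - a) (b - r)). split; [apply Rmin_pos; lra|].
  intros x Hx. pose proof (Rmin_l (r - a) (b - r)). pose proof (Rmin_r (r - a) (b - r)).
  apply Rabs_def2 in Hx. split; [apply HG | apply Hmax]; lra.
Qed.

Lemma C1_with_Icc_continuous_at_0 (h h1 : R -> R) : C1_with (Icc 0 1) h h1 ->
  forall e, 0 < e -> exists d, 0 < d /\ forall t, 0 < t < d -> Rabs (h t - h 0) < e.
Proof.
  intros [Hd _] e He.
  destruct (deriv_within_eps_delta _ _ _ 0 Hd ltac:(unfold Icc; lra) e He) as [d [Hd0 Hd']].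
  exists (Rmin d 1). split; [apply Rmin_pos; lra|]. intros t Ht.
  pose proof (Rmin_l d 1). pose proof (Rmin_r d 1).
  apply Hd'; [unfold Icc; lra | rewrite Rminus_0_r, Rabs_pos_eq; lra].
Qed.

Lemma C1_with_Icc_near_0 (h h1 : R -> R) : C1_with (Icc 0 1) h h1 -> 0 < h 0 ->
  exists dh C1, 0 < dh <= 1 /\ 0 <= C1 /\ forall r, 0 <= r < dh ->
    (9/10 * h 0 <= h r <= 11/10 * h 0) /\ Rabs (h1 r) <= C1.
Proof.
  intros [Hd Hc] Hh0. assert (I0 : Icc 0 1 0) by (unfold Icc; lra).
  destruct (deriv_within_eps_delta _ _ _ 0 Hd I0 (h 0 / 10) ltac:(lra)) as [d1 [Hd1 Hd1']].
  destruct (continuous_within_eps_delta _ _ 0 Hc I0 1 ltac:(lra)) as [d2 [Hd2 Hd2']].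
  exists (Rmin 1 (Rmin d1 d2)), (Rabs (h1 0) + 1).
  pose proof (Rmin_l 1 (Rmin d1 d2)). pose proof (Rmin_r 1 (Rmin d1 d2)).
  pose proof (Rmin_l d1 d2). pose proof (Rmin_r d1 d2). pose proof (Rabs_pos (h1 0)).
  split; [split; [apply Rmin_pos; [lra | apply Rmin_pos; lra] | lra]|]. split; [lra|].
  intros r Hr. assert (Ir : Icc 0 1 r) by (unfold Icc; lra).
  assert (Hr0 : Rabs (r - 0) = r) by (rewrite Rminus_0_r; apply Rabs_pos_eq; lra).
  specialize (Hd1' r Ir ltac:(lra)). specialize (Hd2' r Ir ltac:(lra)).
  apply Rabs_def2 in Hd1'. split; [lra|].
  replace (h1 r) with ((h1 r - h1 0) + h1 0) by ring.
  eapply Rle_trans; [apply Rabs_triang | lra].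
Qed.

(** * Radial profiles *)

Section RadialProfile.

Variables (U U1 U2 S : R -> R) (M : R).
Hypothesis HU : forall r, 0 < r < 1 -> is_derive U r (U1 r) /\ is_derive U1 r (U2 r).
Hypothesis Hode : forall r, 0 < r < 1 -> U1 r + r * U2 r = - (r * S r).
Hypothesis HS : forall r, 0 < r < 1 -> 0 <= S r.
Hypothesis HU0 : forall e, 0 < e -> exists d, 0 < d /\
  forall t, 0 < t < d -> Rabs (U t - M) < e /\ Rabs (U1 t) < e.

Lemma is_derive_r_U1 r : 0 < r < 1 -> is_derive (fun t => t * U1 t) r (- (r * S r)).
Proof.
  intros Hr. eapply is_derive_eq.
  - apply is_derive_Rmult; [apply is_derive_Rid | apply HU, Hr].
  - rewrite <- Hode by exact Hr. ring.
Qed.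

Lemma r_U1_vanishes_at_0 e : 0 < e -> exists d, 0 < d /\ forall t, 0 < t < d -> Rabs (t * U1 t) < e.
Proof.
  intros He. destruct (HU0 1 Rlt_0_1) as [d [Hd Hd']]. exists (Rmin d (Rmin e 1)). split.
  { apply Rmin_pos; [lra | apply Rmin_pos; lra]. }
  intros t Ht. pose proof (Rmin_l d (Rmin e 1)). pose proof (Rmin_r d (Rmin e 1)).
  pose proof (Rmin_l e 1). destruct (Hd' t ltac:(lra)) as [_ Hu1].
  rewrite Rabs_mult, (Rabs_pos_eq t) by lra. pose proof (Rabs_pos (U1 t)). nra.
Qed.

Lemma U1_nonpos r : 0 < r < 1 -> U1 r <= 0.
Proof.
  intros Hr. assert (0 <= - (r * U1 r)); [|nra].
  apply (ge_of_nondecreasing_from_0 (fun t => - (t * U1 t)) (fun t => t * S t) r 0); [lra| |].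
  - intros t Ht. split.
    + eapply is_derive_eq; [apply is_derive_Ropp, is_derive_r_U1; lra | ring].
    + apply Rmult_le_pos; [lra | apply HS; lra].
  - intros e He. destruct (r_U1_vanishes_at_0 e He) as [d [Hd Hd']]. exists d. split; auto.
    intros t Ht. specialize (Hd' t Ht). apply Rabs_def2 in Hd'. lra.
Qed.

Lemma U_le_center r : 0 < r < 1 -> U r <= M.
Proof.
  intros Hr. assert (- M <= - U r); [|lra].
  apply (ge_of_nondecreasing_from_0 (fun t => - U t) (fun t => - U1 t) r (- M)); [lra| |].
  - intros t Ht. split; [apply is_derive_Ropp, HU; lra|].
    assert (U1 t <= 0) by (apply U1_nonpos; lra). lra.
  - intros e He. destruct (HU0 e He) as [d [Hd Hd']]. exists d. split; auto.
    intros t Ht. destruct (Hd' t Ht) as [H1 _]. apply Rabs_def2 in H1. lra.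
Qed.

Section BoundedSource.

Variables (c r : R).
Hypothesis Hr : 0 < r < 1.
Hypothesis Hc : forall t, 0 < t <= r -> S t <= c.

Lemma r_U1_ge s : 0 < s <= r -> - (s * U1 s) <= c * s ^ 2 / 2.
Proof.
  intros Hs. assert (Hc0 : 0 <= c) by (pose proof (HS r Hr); pose proof (Hc r ltac:(lra)); lra).
  assert (0 <= s * U1 s + c / 2 * s ^ 2); [|lra].
  apply (ge_of_nondecreasing_from_0 (fun t => t * U1 t + c / 2 * t ^ 2) (fun t => t * (c - S t)) s 0).
  { lra. }
  - intros t Ht. split.
    + eapply is_derive_eq.
      * apply is_derive_Rplus; [apply is_derive_r_U1; lra|].
        apply is_derive_Rscal, is_derive_Rsqr, is_derive_Rid.
      * cbv beta; field.
    + apply Rmult_le_pos; [lra|]. pose proof (Hc t ltac:(lra)). lra.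
  - intros e He. destruct (r_U1_vanishes_at_0 e He) as [d [Hd Hd']]. exists d. split; auto.
    intros t Ht. specialize (Hd' t Ht). apply Rabs_def2 in Hd'.
    assert (0 <= c / 2 * t ^ 2) by (apply Rmult_le_pos; [lra | apply pow2_ge_0]). lra.
Qed.

Lemma center_sub_U_le : M - U r <= c * r ^ 2 / 4.
Proof.
  assert (Hc0 : 0 <= c) by (pose proof (HS r Hr); pose proof (Hc r ltac:(lra)); lra).
  assert (0 <= U r - M + c / 4 * r ^ 2); [|lra].
  apply (ge_of_nondecreasing_from_0 (fun t => U t - M + c / 4 * t ^ 2) (fun t => U1 t + c / 2 * t) r 0).
  { lra. }
  - intros t Ht. split.
    + eapply is_derive_eq.
      * apply is_derive_Rplus; [apply is_derive_Rminus; [apply HU; lra | apply is_derive_Rconst]|].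
        apply is_derive_Rscal, is_derive_Rsqr, is_derive_Rid.
      * cbv beta; field.
    + pose proof (r_U1_ge t Ht). assert (- U1 t <= c * t / 2); [|lra].
      apply Rmult_le_reg_l with t; [lra | nra].
  - intros e He. destruct (HU0 e He) as [d [Hd Hd']]. exists d. split; auto.
    intros t Ht. destruct (Hd' t Ht) as [Hu _]. apply Rabs_def2 in Hu.
    assert (0 <= c / 4 * t ^ 2) by (apply Rmult_le_pos; [lra | apply pow2_ge_0]). lra.
Qed.

End BoundedSource.

Lemma center_le_of_vanishing_at_1 c : (forall t, 0 < t < 1 -> S t <= c) ->
  (forall e, 0 < e -> exists r, 0 < r < 1 /\ U r < e) -> M <= c / 4.
Proof.
  intros Hc H1. apply Rle_plus_epsilon. intros e He.
  destruct (H1 e He) as [r [Hr HUr]].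
  assert (Hc0 : 0 <= c) by (pose proof (HS r Hr); pose proof (Hc r Hr); lra).
  pose proof (center_sub_U_le c r Hr ltac:(intros t Ht; apply Hc; lra)).
  assert (c * r ^ 2 <= c) by (apply Rle_trans with (c * 1); [apply Rmult_le_compat_l; nra | lra]).
  lra.
Qed.

End RadialProfile.

Lemma radial_ode_divergence_form (v1 v2 s r : R) : 0 < r ->
  - v2 - / r * v1 = s -> v1 + r * v2 = - (r * s).
Proof. intros Hr <-. field. lra. Qed.

Lemma C2_with_Icc_is_derive (U U1 U2 : R -> R) r : C2_with (Icc 0 1) U U1 U2 -> 0 < r < 1 ->
  is_derive U r (U1 r) /\ is_derive U1 r (U2 r).
Proof.
  intros [HU [HU1 _]] Hr. split; apply deriv_within_Icc_is_derive; assumption.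
Qed.

Lemma C2_with_Icc_limits_at_0 (U U1 U2 : R -> R) e : C2_with (Icc 0 1) U U1 U2 -> 0 < e ->
  exists d, 0 < d /\ forall t, 0 < t < d -> Rabs (U t - U 0) < e /\ Rabs (U1 t - U1 0) < e.
Proof.
  intros [HU [HU1 _]] He. assert (I0 : Icc 0 1 0) by (unfold Icc; lra).
  destruct (deriv_within_eps_delta _ _ _ 0 HU I0 e He) as [d1 [Hd1 H1]].
  destruct (deriv_within_eps_delta _ _ _ 0 HU1 I0 e He) as [d2 [Hd2 H2]].
  exists (Rmin 1 (Rmin d1 d2)). split; [apply Rmin_pos; [lra | apply Rmin_pos; lra]|].
  intros t Ht. pose proof (Rmin_l 1 (Rmin d1 d2)). pose proof (Rmin_r 1 (Rmin d1 d2)).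
  pose proof (Rmin_l d1 d2). pose proof (Rmin_r d1 d2).
  assert (It : Icc 0 1 t) by (unfold Icc; lra).
  assert (Ht0 : Rabs (t - 0) = t) by (rewrite Rminus_0_r; apply Rabs_pos_eq; lra).
  split; [apply H1 | apply H2]; auto; lra.
Qed.

(** * Elementary estimates for the approximate first integrals *)

Lemma E_rate_estimate (psi phi k eps Lam r T2 a : R) : 0 < r -> 0 < Lam ->
  0 <= psi <= 11/20 * Lam * r ^ 2 -> Lam * r ^ 2 <= 16 -> 0 <= phi <= 11/10 * Lam * r ^ 2 ->
  0 <= k <= eps -> Rabs T2 <= Lam * r * a ->
  Rabs ((2 - psi) * k * psi ^ 2 / r - k * phi * psi / r + T2) <= Lam * r * (100 * eps + a).
Proof.
  intros Hr HL Hpsi HLr Hphi Hk HT2.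
  assert (Hpsi8 : psi <= 44/5) by lra.
  set (p := psi / r).
  assert (Hp : 0 <= p <= 11/20 * Lam * r).
  { unfold p. split; [apply Rdiv_le_0_compat; lra | apply Rle_div_l; nra]. }
  replace ((2 - psi) * k * psi ^ 2 / r - k * phi * psi / r + T2)
    with (k * p * ((2 - psi) * psi - phi) + T2) by (unfold p; field; lra).
  assert (Hq : Rabs ((2 - psi) * psi - phi) <= 78) by (apply Rabs_le; nra).
  assert (Hkp : 0 <= k * p <= eps * (11/20 * Lam * r)) by (split; nra).
  eapply Rle_trans; [apply Rabs_triang|]. rewrite Rabs_mult, (Rabs_pos_eq (k * p)) by lra.
  pose proof (Rabs_pos ((2 - psi) * psi - phi)). nra.
Qed.

Lemma W_rate_estimate (psi X Er k eps Lam r hr h1r h0 C1 a : R) : 0 < r -> 0 < Lam ->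
  0 <= psi <= 11/20 * Lam * r ^ 2 -> Lam * r ^ 2 <= 16 -> 0 <= X <= 11/10 -> 0 <= k <= eps ->
  0 < h0 -> 9/10 * h0 <= hr -> Rabs h1r <= C1 -> Rabs Er <= Lam * r ^ 2 * a / 2 ->
  100 * eps <= a ->
  Rabs ((1 - psi / 4) * Er / (2 * r) + X * h1r / hr - X * k * psi / r
        - (1 - psi / 4) * k * psi ^ 2 / (2 * r)) <= Lam * a * r / 2 + 2 * (C1 / h0).
Proof.
  intros Hr HL Hpsi HLr HX Hk Hh0 Hhr Hh1 HEr Ha.
  assert (Hpsi8 : psi <= 44/5) by lra.
  set (p := psi / r). set (y := 1 - psi / 4).
  assert (Hp : 0 <= p <= 11/20 * Lam * r).
  { unfold p. split; [apply Rdiv_le_0_compat; lra | apply Rle_div_l; nra]. }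
  assert (Hy : Rabs y <= 6/5) by (unfold y; apply Rabs_le; lra).
  assert (T1 : Rabs (y * Er / (2 * r)) <= 3/10 * Lam * a * r).
  { unfold Rdiv. rewrite !Rabs_mult, Rabs_inv, (Rabs_pos_eq (2 * r)) by lra.
    apply Rle_trans with (6/5 * (Lam * r ^ 2 * a / 2) * / (2 * r)); [|right; field; lra].
    apply Rmult_le_compat_r; [left; apply Rinv_0_lt_compat; lra|].
    apply Rmult_le_compat; auto using Rabs_pos. }
  assert (T2 : Rabs (X * h1r / hr) <= 2 * (C1 / h0)).
  { pose proof (Rabs_pos h1r).
    unfold Rdiv. rewrite !Rabs_mult, Rabs_inv, (Rabs_pos_eq hr), (Rabs_pos_eq X) by lra.
    apply Rle_trans with (11/10 * C1 * / (9/10 * h0)).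
    - apply Rmult_le_compat; [nra | left; apply Rinv_0_lt_compat; lra | nra |].
      apply Rinv_le_contravar; lra.
    - apply Rle_trans with (11/9 * (C1 * / h0)); [right; field; lra|].
      assert (0 <= C1 * / h0) by (apply Rle_div_r; lra). lra. }
  assert (T3 : Rabs (X * k * psi / r + y * k * psi ^ 2 / (2 * r)) <= 4 * eps * Lam * r).
  { replace (X * k * psi / r + y * k * psi ^ 2 / (2 * r)) with (k * p * (X + y * psi / 2))
      by (unfold p; field; lra).
    rewrite Rabs_mult, (Rabs_pos_eq (k * p)) by nra.
    assert (Rabs (X + y * psi / 2) <= 7) by (apply Rabs_le; apply Rabs_le_between in Hy; nra).
    assert (k * p <= eps * (11/20 * Lam * r)) by nra.
    assert (k * p * Rabs (X + y * psi / 2) <= k * p * 7) by (apply Rmult_le_compat_l; nra).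
    assert (0 <= eps * Lam * r) by (apply Rmult_le_pos; [apply Rmult_le_pos|]; lra). lra. }
  replace (y * Er / (2 * r) + X * h1r / hr - X * k * psi / r - y * k * psi ^ 2 / (2 * r))
    with (y * Er / (2 * r) + X * h1r / hr - (X * k * psi / r + y * k * psi ^ 2 / (2 * r)))
    by ring.
  eapply Rle_trans; [apply Rabs_triang|]. rewrite Rabs_Ropp.
  eapply Rle_trans; [apply Rplus_le_compat_r, Rabs_triang|].
  assert (100 * eps * (Lam * r) <= a * (Lam * r)) by (apply Rmult_le_compat_r; nra).
  assert (0 <= eps * (Lam * r)) by (apply Rmult_le_pos; nra). lra.
Qed.

Lemma liouville_profile_estimate (y X phi rho2 d : R) :
  Rabs (X - y ^ 2) <= d -> Rabs (phi - 8 * y * (1 - y)) <= d -> phi = rho2 * X ->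
  1/270 <= X -> 0 <= rho2 <= 16 -> y <= 1 -> 0 <= d <= 1/2700 ->
  Rabs (phi - 64 * rho2 / (8 + rho2) ^ 2) <= 1000 * d.
Proof.
  intros HQ HE Hphi2 HX0 Hr Hy Hd.
  assert (HX : X = y ^ 2 + (X - y ^ 2)) by ring.
  assert (Hphi : phi = 8 * y * (1 - y) + (phi - 8 * y * (1 - y))) by ring.
  set (Q := X - y ^ 2) in *. set (E := phi - 8 * y * (1 - y)) in *. clearbody Q E.
  apply Rabs_le_between in HQ. apply Rabs_le_between in HE.
  assert (Hy2 : 1/300 <= y ^ 2) by lra.
  assert (Hphi0 : 0 <= phi) by (rewrite Hphi2; apply Rmult_le_pos; lra).
  assert (Hypos : 1/18 <= y).
  { destruct (Rle_or_lt (1/18) y) as [H|H]; auto.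
    destruct (Rle_or_lt y 0) as [H0|H0].
    - assert (y <= -1/18) by nra. nra.
    - nra. }
  set (ys := 8 / (8 + rho2)).
  assert (Hys : 0 < ys <= 1) by (unfold ys; split; [apply Rdiv_lt_0_compat; lra| apply Rle_div_l; lra]).
  assert (K1 : y * (8 - (8 + rho2) * y) = rho2 * Q - E) by (rewrite Hphi2 in Hphi; rewrite HX in Hphi; nra).
  assert (K2 : Rabs (8 - (8 + rho2) * y) <= 306 * d).
  { assert (Rabs (y * (8 - (8 + rho2) * y)) <= 17 * d) by (rewrite K1; apply Rabs_le; nra).
    rewrite Rabs_mult, (Rabs_pos_eq y) in H by lra.
    assert (0 <= Rabs (8 - (8 + rho2) * y)) by apply Rabs_pos.
    nra. }
  assert (K3 : Rabs (y - ys) <= 39 * d).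
  { replace (y - ys) with (- (8 - (8 + rho2) * y) / (8 + rho2)) by (unfold ys; field; lra).
    unfold Rdiv. rewrite Rabs_mult, Rabs_Ropp, Rabs_inv, (Rabs_pos_eq (8 + rho2)) by lra.
    apply Rmult_le_reg_r with (8 + rho2). lra. rewrite Rmult_assoc, Rinv_l, Rmult_1_r by lra.
    assert (0 <= d) by lra. nra. }
  replace (64 * rho2 / (8 + rho2) ^ 2) with (8 * ys * (1 - ys)) by (unfold ys; field; lra).
  rewrite Hphi.
  replace (8 * y * (1 - y) + E - 8 * ys * (1 - ys)) with (8 * (y - ys) * (1 - y - ys) + E) by ring.
  apply Rabs_le_between in K3. apply Rabs_le. 
  assert (Rabs (1 - y - ys) <= 3) by (apply Rabs_le; lra).
  assert (Hprod : Rabs (8 * (y - ys) * (1 - y - ys)) <= 8 * (39 * d) * 3).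
  { rewrite !Rabs_mult. rewrite (Rabs_pos_eq 8) by lra.
    apply Rmult_le_compat. apply Rmult_le_pos; [lra|apply Rabs_pos]. apply Rabs_pos.
    apply Rmult_le_compat_l. lra. apply Rabs_le; lra. auto. }
  apply Rabs_le_between in Hprod. lra.
Qed.

Lemma liouville_profile_at_max (y X phi rho2 d z : R) :
  Rabs (X - y ^ 2) <= d -> Rabs (phi - 8 * y * (1 - y)) <= d -> phi = rho2 * X ->
  1/270 <= X -> 0 <= rho2 <= 16 -> y <= 1 -> 0 <= d -> 0 < z <= 1 -> d <= z ^ 2 / 100000000 ->
  2 - 1000 * d <= phi ->
  Rabs (phi - 2) < z /\ Rabs (4 - 4 * y - 2) < z /\ Rabs (sqrt rho2 - sqrt 8) < z.
Proof.
  intros HQ HE Hphi2 HX0 Hr Hy Hd Hz Hdz Hphim.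
  assert (HX : X = y ^ 2 + (X - y ^ 2)) by ring.
  assert (Hphi : phi = 8 * y * (1 - y) + (phi - 8 * y * (1 - y))) by ring.
  set (Q := X - y ^ 2) in *. set (E := phi - 8 * y * (1 - y)) in *. clearbody Q E.
  assert (Hz2 : z ^ 2 <= z) by nra.
  apply Rabs_le_between in HQ. apply Rabs_le_between in HE.
  assert (P1 : Rabs (phi - 2) <= z / 1000).
  { apply Rabs_le. assert (0 <= (2*y-1)^2) by apply pow2_ge_0. assert (8 * y * (1 - y) <= 2) by nra. nra. }
  assert (P2 : (2 * y - 1) ^ 2 <= z ^ 2 / 100000).
  { assert (8 * y * (1 - y) >= 2 - 1001 * d) by lra. nra. }
  assert (P3 : Rabs (2 * y - 1) <= z / 300).
  { apply Rabs_le. split; nra. }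
  apply Rabs_le_between in P3.
  assert (P4 : Rabs (X - 1/4) <= z / 200).
  { apply Rabs_le. rewrite HX. split; nra. }
  apply Rabs_le_between in P4.
  assert (P5 : Rabs (rho2 - 8) <= z / 7).
  { assert (HXp : 0 < X) by lra.
    replace (rho2 - 8) with ((phi - 8 * X) / X) by (rewrite Hphi2; field; lra).
    apply Rabs_le_between in P1.
    apply Rabs_le. split.
    - apply Rle_div_r. lra. nra.
    - apply Rle_div_l. lra. nra. }
  split. lra. split. apply Rabs_lt_between. split; nra.
  assert (H8 : 2 <= sqrt 8).
  { rewrite <- (sqrt_pow2 2) by lra. apply sqrt_le_1_alt. lra. }
  pose proof (Rabs_sqrt_sub_le rho2 8 ltac:(lra) ltac:(lra)).
  assert (Rabs (rho2 - 8) / sqrt 8 <= Rabs (rho2 - 8) / 2).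
  { apply Rmult_le_compat_l; [apply Rabs_pos | apply Rinv_le_contravar; lra]. }
  lra.
Qed.

(** * Logarithmically convex nonlinearities *)

Section LogConvexNonlinearity.

Variables (f f1 f2 g1 g2 : R -> R) (t0 : R).
Hypothesis Hf2 : C2_with (Ici t0) f f1 f2.
Hypothesis Hg1 : deriv_within (Ici t0) (fun t => ln (f t)) g1.
Hypothesis Hg2 : deriv_within (Ici t0) g1 g2.
Hypothesis Hfpos : forall t, t0 <= t -> 0 < f t.
Hypothesis Hg1pos : forall t, t0 <= t -> 0 < g1 t.
Hypothesis Hg2pos : forall t, t0 <= t -> 0 < g2 t.

Lemma is_derive_f t : t0 < t -> is_derive f t (f1 t).
Proof. apply deriv_within_Ici_is_derive, Hf2. Qed.

Lemma is_derive_f1 t : t0 < t -> is_derive f1 t (f2 t).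
Proof. apply deriv_within_Ici_is_derive, Hf2. Qed.

Lemma is_derive_g1 t : t0 < t -> is_derive g1 t (g2 t).
Proof. apply deriv_within_Ici_is_derive, Hg2. Qed.

Lemma is_derive_ln_f t : t0 < t -> is_derive (fun s => ln (f s)) t (g1 t).
Proof. apply deriv_within_Ici_is_derive, Hg1. Qed.

Lemma f1_eq t : t0 < t -> f1 t = f t * g1 t.
Proof.
  intros Ht. assert (Hft : 0 < f t) by (apply Hfpos; lra).
  assert (H : is_derive (fun s => ln (f s)) t (f1 t / f t)).
  { apply is_derive_Rln; [apply is_derive_f; lra | lra]. }
  apply is_derive_unique in H.
  rewrite (is_derive_unique _ _ _ (is_derive_ln_f t Ht)) in H.
  rewrite H. field. lra.
Qed.

Lemma f2_eq t : t0 < t -> f2 t = f1 t * g1 t + f t * g2 t.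
Proof.
  intros Ht. assert (Hft : 0 < f t) by (apply Hfpos; lra).
  assert (H : is_derive g1 t ((f2 t * f t - f1 t * f1 t) / f t ^ 2)).
  { apply is_derive_ext_loc with (f := fun s => f1 s / f s).
    - assert (He : 0 < t - t0) by lra. exists (mkposreal _ He). intros y Hy.
      assert (Hy' : Rabs (y - t) < t - t0) by exact Hy. apply Rabs_def2 in Hy'.
      change (f1 y / f y = g1 y). rewrite (f1_eq y) by lra.
      field. assert (0 < f y) by (apply Hfpos; lra). lra.
    - apply is_derive_div; [apply is_derive_f1 | apply is_derive_f | ]; lra. }
  apply is_derive_unique in H.
  rewrite (is_derive_unique _ _ _ (is_derive_g1 t Ht)) in H.
  rewrite H, (f1_eq t Ht). field. lra.
Qed.

Lemma f1_pos t : t0 < t -> 0 < f1 t.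
Proof. intros Ht. rewrite f1_eq by lra. apply Rmult_lt_0_compat; [apply Hfpos | apply Hg1pos]; lra. Qed.

Lemma g1_le s t : t0 < s <= t -> g1 s <= g1 t.
Proof.
  intros Hst. apply (nondecreasing_of_derive_nonneg g1 g2); [lra|].
  intros x Hx. split; [apply is_derive_g1; lra | left; apply Hg2pos; lra].
Qed.

Lemma f_le s t : t0 < s <= t -> f s <= f t.
Proof.
  intros Hst. apply (nondecreasing_of_derive_nonneg f f1); [lra|].
  intros x Hx. split; [apply is_derive_f; lra | left; apply f1_pos; lra].
Qed.

Lemma f1_le s t : t0 < s <= t -> f1 s <= f1 t.
Proof.
  intros Hst. apply (nondecreasing_of_derive_nonneg f1 f2); [lra|].
  intros x Hx. split; [apply is_derive_f1; lra|].
  rewrite f2_eq by lra. pose proof (f1_pos x ltac:(lra)).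
  assert (0 < f x) by (apply Hfpos; lra). assert (0 < g1 x) by (apply Hg1pos; lra).
  assert (0 < g2 x) by (apply Hg2pos; lra). nra.
Qed.

Lemma ln_f_ge_tangent s t : t0 < s <= t -> ln (f s) + g1 s * (t - s) <= ln (f t).
Proof.
  intros Hst.
  assert (H : ln (f s) - g1 s * s <= ln (f t) - g1 s * t); [|lra].
  apply (nondecreasing_of_derive_nonneg (fun y => ln (f y) - g1 s * y) (fun y => g1 y - g1 s)).
  { lra. }
  intros x Hx. split.
  - eapply is_derive_eq.
    + apply is_derive_Rminus; [apply is_derive_ln_f; lra | apply is_derive_Rscal, is_derive_Rid].
    + ring.
  - assert (g1 s <= g1 x) by (apply g1_le; lra). lra.
Qed.

Lemma ln_f_sub_le s t : t0 < s <= t -> ln (f t) - ln (f s) <= g1 t * (t - s).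
Proof.
  intros Hst.
  assert (H : g1 t * s - ln (f s) <= g1 t * t - ln (f t)); [|lra].
  apply (nondecreasing_of_derive_nonneg (fun y => g1 t * y - ln (f y)) (fun y => g1 t - g1 y)).
  { lra. }
  intros x Hx. split.
  - eapply is_derive_eq.
    + apply is_derive_Rminus; [apply is_derive_Rscal, is_derive_Rid | apply is_derive_ln_f; lra].
    + ring.
  - assert (g1 x <= g1 t) by (apply g1_le; lra). lra.
Qed.

Lemma ln_f_unbounded K : exists T, t0 + 1 < T /\ forall t, T <= t -> K <= ln (f t).
Proof.
  set (a := g1 (t0 + 1)). assert (Ha : 0 < a) by (apply Hg1pos; lra).
  set (c := Rabs (K - ln (f (t0 + 1)))).
  assert (Hc : 0 <= c / a) by (apply Rdiv_le_0_compat; [apply Rabs_pos | lra]).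
  exists (t0 + 2 + c / a). split; [lra|]. intros t Ht.
  pose proof (ln_f_ge_tangent (t0 + 1) t ltac:(lra)) as Htan. fold a in Htan.
  assert (Hgrow : c <= a * (t - (t0 + 1))).
  { replace c with (a * (c / a)) at 1 by (field; lra). apply Rmult_le_compat_l; lra. }
  assert (HK : K - ln (f (t0 + 1)) <= c) by apply Rle_abs. lra.
Qed.

Lemma ln_g1_sub_le eps T s t : t0 < T -> (forall x, T <= x -> g2 x <= eps * g1 x ^ 2) ->
  T <= s <= t -> ln (g1 t) - ln (g1 s) <= eps * (ln (f t) - ln (f s)).
Proof.
  intros HT Heps Hst.
  assert (H : eps * ln (f s) - ln (g1 s) <= eps * ln (f t) - ln (g1 t)); [|lra].
  apply (nondecreasing_of_derive_nonneg (fun y => eps * ln (f y) - ln (g1 y))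
           (fun y => eps * g1 y - g2 y / g1 y)); [lra|].
  intros x Hx. assert (0 < g1 x) by (apply Hg1pos; lra). split.
  - eapply is_derive_eq.
    + apply is_derive_Rminus; [apply is_derive_Rscal, is_derive_ln_f; lra |].
      apply is_derive_Rln; [apply is_derive_g1; lra | lra].
    + field. lra.
  - specialize (Heps x ltac:(lra)).
    assert (g2 x / g1 x <= eps * g1 x) by (apply Rle_div_l; [lra | nra]). lra.
Qed.

Lemma g2_le_eps_g1_sqr q : 1 <= q ->
  is_lim (fun t => (g1 t)^2 / (ln (f t) * g2 t)) p_infty (Finite q) ->
  forall eps, 0 < eps -> exists T, t0 + 1 < T /\ forall t, T <= t -> g2 t <= eps * g1 t ^ 2.
Proof.
  intros Hq Hlim eps Heps.
  apply (proj1 (filterlim_locally _ _)) with (eps := mkposreal (/ 2) ltac:(lra)) in Hlim.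
  destruct Hlim as [M1 HM1].
  destruct (ln_f_unbounded (2 / eps)) as [T1 [HT1 HT1']].
  exists (Rmax T1 (M1 + 1)). split; [pose proof (Rmax_l T1 (M1 + 1)); lra|].
  intros t Ht. pose proof (Rmax_l T1 (M1 + 1)). pose proof (Rmax_r T1 (M1 + 1)).
  assert (Hb : Rabs (g1 t ^ 2 / (ln (f t) * g2 t) - q) < / 2) by exact (HM1 t ltac:(lra)).
  apply Rabs_def2 in Hb. specialize (HT1' t ltac:(lra)).
  assert (H2e : 0 < 2 / eps) by (apply Rdiv_lt_0_compat; lra).
  assert (Hg2t : 0 < g2 t) by (apply Hg2pos; lra).
  assert (Hp : 0 < ln (f t) * g2 t) by (apply Rmult_lt_0_compat; lra).
  assert (/ 2 * (ln (f t) * g2 t) <= g1 t ^ 2) by (apply Rle_div_r; lra).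
  assert (2 / eps * g2 t <= ln (f t) * g2 t) by (apply Rmult_le_compat_r; lra).
  assert (2 / eps * g2 t = 2 * (g2 t / eps)) by (field; lra).
  assert (Hq2 : g2 t / eps <= g1 t ^ 2) by lra.
  assert (g2 t <= g1 t ^ 2 * eps) by (apply Rle_div_l; lra). lra.
Qed.

(** * One solution on the blow-up scale *)

Section BlowUpRegion.

Variables (h h1 U U1 U2 : R -> R) (L M T eps RR C1 : R).
Hypothesis HL : 0 < L.
Hypothesis Hhpos : forall r, 0 <= r < 1 -> 0 < h r.
Hypothesis Hh : forall r, 0 < r < 1 -> is_derive h r (h1 r).
Hypothesis Hh_at_0 : forall e, 0 < e -> exists d, 0 < d /\
  forall t, 0 < t < d -> Rabs (h t - h 0) < e.
Hypothesis Hh_near_0 : forall r, 0 < r <= RR ->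
  (9/10 * h 0 <= h r <= 11/10 * h 0) /\ Rabs (h1 r) <= C1.
Hypothesis HC1 : 0 <= C1.
Hypothesis HU : forall r, 0 < r < 1 -> is_derive U r (U1 r) /\ is_derive U1 r (U2 r).
Hypothesis Hode : forall r, 0 < r < 1 -> U1 r + r * U2 r = - (r * (L * h r * f (U r))).
Hypothesis HU0 : forall e, 0 < e -> exists d, 0 < d /\
  forall t, 0 < t < d -> Rabs (U t - M) < e /\ Rabs (U1 t) < e.
Hypothesis Hupos : forall r, 0 < r < 1 -> 0 < U r.
Hypothesis Hfnn : forall t, 0 <= t -> 0 <= f t.
Hypothesis Hf_le_center : forall s, 0 <= s <= M -> f s <= f M.
Hypothesis HM : t0 < M.
Hypothesis HT : t0 < T.
Hypothesis HTM : T <= M - 5 / g1 M.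
Hypothesis Heps : 0 < eps <= 1/100.
Hypothesis Hg2_small : forall t, T <= t -> g2 t <= eps * g1 t ^ 2.
Hypothesis HRR : RR = 4 / sqrt (L * h 0 * f1 M).
Hypothesis HRR1 : RR < 1.

Definition Lam := L * h 0 * f1 M.
Definition phi r := L * r ^ 2 * h r * f1 (U r).
Definition psi r := - r * g1 (U r) * U1 r.
Definition X r := h r * f1 (U r) / (h 0 * f1 M).
Definition kappa r := g2 (U r) / g1 (U r) ^ 2.
(* For the Liouville bubble [phi = 8 y (1 - y)] and [X = y ^ 2], where [y = 1 - psi / 4];
   [E] and [W] measure the failure of these two identities. *)
Definition E r := psi r ^ 2 / 2 - 2 * psi r + phi r.
Definition W r := exp (ln (f M) - ln (f (U r))) * (X r - (1 - psi r / 4) ^ 2).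
Definition defect := 100 * eps + RR * (C1 / h 0).

Lemma h0_pos : 0 < h 0.
Proof. apply Hhpos; lra. Qed.

Lemma Lam_pos : 0 < Lam.
Proof.
  unfold Lam. pose proof h0_pos. pose proof (f1_pos M HM).
  apply Rmult_lt_0_compat; [apply Rmult_lt_0_compat|]; lra.
Qed.

Lemma RR_pos : 0 < RR.
Proof. rewrite HRR. apply Rdiv_lt_0_compat; [lra | apply sqrt_lt_R0, Lam_pos]. Qed.

Lemma Lam_sqr_le r : 0 < r <= RR -> Lam * r ^ 2 <= 16.
Proof.
  intros Hr. pose proof Lam_pos. pose proof (sqrt_lt_R0 _ Lam_pos).
  assert (Hs : sqrt Lam * sqrt Lam = Lam) by (apply sqrt_sqrt; lra).
  apply Rle_trans with (Lam * RR ^ 2).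
  - apply Rmult_le_compat_l; [lra | apply pow_incr; lra].
  - right. rewrite HRR. fold Lam. rewrite <- Hs at 1. field. lra.
Qed.

Lemma source_nonneg r : 0 < r < 1 -> 0 <= L * h r * f (U r).
Proof.
  intros Hr. apply Rmult_le_pos; [apply Rmult_le_pos; [lra | left; apply Hhpos; lra]|].
  apply Hfnn. left; apply Hupos, Hr.
Qed.

Lemma U1_nonpos_sol r : 0 < r < 1 -> U1 r <= 0.
Proof. exact (U1_nonpos U U1 U2 _ M HU Hode source_nonneg HU0 r). Qed.

Lemma U_le_M r : 0 < r < 1 -> U r <= M.
Proof. exact (U_le_center U U1 U2 _ M HU Hode source_nonneg HU0 r). Qed.

Lemma source_le r : 0 < r <= RR -> L * h r * f (U r) <= 11/10 * Lam / g1 M.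
Proof.
  intros Hr. pose proof (Hg1pos M ltac:(lra)). pose proof h0_pos.
  assert (HfU : 0 <= f (U r) <= f M).
  { pose proof (Hupos r ltac:(lra)). pose proof (U_le_M r ltac:(lra)).
    split; [apply Hfnn | apply Hf_le_center]; lra. }
  destruct (Hh_near_0 r Hr) as [[_ Hhr] _]. pose proof (Hhpos r ltac:(lra)).
  replace (11/10 * Lam / g1 M) with (L * (11/10 * h 0) * f M)
    by (unfold Lam; rewrite (f1_eq M HM); field; lra).
  apply Rmult_le_compat; [nra | lra | apply Rmult_le_compat_l; lra | lra].
Qed.

Lemma r_U1_apriori r : 0 < r <= RR -> - (r * U1 r) <= 11/10 * Lam / g1 M * r ^ 2 / 2.
Proof.
  intros Hr. apply (r_U1_ge U U1 U2 _ M HU Hode source_nonneg HU0 _ r); [lra | | lra].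
  intros t Ht. apply source_le. lra.
Qed.

Lemma center_sub_U_apriori r : 0 < r <= RR -> M - U r <= 11/10 * Lam / g1 M * r ^ 2 / 4.
Proof.
  intros Hr. apply (center_sub_U_le U U1 U2 _ M HU Hode source_nonneg HU0 _ r); [lra|].
  intros t Ht. apply source_le. lra.
Qed.

Lemma U_near_M r : 0 < r <= RR -> T <= U r /\ M - U r <= 5 / g1 M.
Proof.
  intros Hr. pose proof (Hg1pos M ltac:(lra)). pose proof (Lam_sqr_le r Hr).
  pose proof (center_sub_U_apriori r Hr).
  assert (M - U r <= 5 / g1 M); [|split; lra].
  eapply Rle_trans; [eassumption|].
  replace (11/10 * Lam / g1 M * r ^ 2 / 4) with (11/40 * (Lam * r ^ 2) / g1 M) by (field; lra).
  apply Rmult_le_compat_r; [left; apply Rinv_0_lt_compat | ]; lra.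
Qed.

Lemma U_gt_t0 r : 0 < r <= RR -> t0 < U r.
Proof. intros Hr. pose proof (U_near_M r Hr). lra. Qed.

Lemma ln_f_drop r : 0 < r <= RR -> 0 <= ln (f M) - ln (f (U r)) <= 11/10 * Lam * r ^ 2 / 4.
Proof.
  intros Hr. pose proof (U_gt_t0 r Hr). pose proof (U_le_M r ltac:(lra)).
  pose proof (Hg1pos M ltac:(lra)). split.
  - pose proof (ln_le_mono (f (U r)) (f M) (Hfpos (U r) ltac:(lra)) (f_le (U r) M ltac:(lra))). lra.
  - eapply Rle_trans; [apply ln_f_sub_le; lra|].
    apply Rle_trans with (g1 M * (11/10 * Lam / g1 M * r ^ 2 / 4)).
    + apply Rmult_le_compat_l; [lra|]. pose proof (center_sub_U_apriori r Hr). lra.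
    + right. field. lra.
Qed.

Lemma ln_g1_drop r : 0 < r <= RR -> 0 <= ln (g1 M) - ln (g1 (U r)) <= 5 * eps.
Proof.
  intros Hr. pose proof (U_near_M r Hr). pose proof (U_le_M r ltac:(lra)).
  pose proof (ln_f_drop r Hr). pose proof (Lam_sqr_le r Hr). split.
  - pose proof (ln_le_mono (g1 (U r)) (g1 M) (Hg1pos (U r) ltac:(lra)) (g1_le (U r) M ltac:(lra))).
    lra.
  - eapply Rle_trans; [apply (ln_g1_sub_le eps T); auto; lra|]. nra.
Qed.

Lemma psi_bounds r : 0 < r <= RR -> 0 <= psi r <= 11/20 * Lam * r ^ 2.
Proof.
  intros Hr. pose proof (U_gt_t0 r Hr). pose proof (U_le_M r ltac:(lra)).
  pose proof (U1_nonpos_sol r ltac:(lra)). pose proof (r_U1_apriori r Hr).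
  pose proof (Hg1pos (U r) ltac:(lra)). pose proof (g1_le (U r) M ltac:(lra)).
  unfold psi. replace (- r * g1 (U r) * U1 r) with (g1 (U r) * (- (r * U1 r))) by ring.
  assert (0 <= - (r * U1 r)) by nra. split; [nra|].
  apply Rle_trans with (g1 M * (11/10 * Lam / g1 M * r ^ 2 / 2)).
  - apply Rmult_le_compat; lra.
  - right. field. lra.
Qed.

Lemma kappa_bounds r : 0 < r <= RR -> 0 <= kappa r <= eps.
Proof.
  intros Hr. pose proof (U_near_M r Hr). unfold kappa.
  assert (0 < g1 (U r) ^ 2) by (apply pow_lt, Hg1pos; lra). split.
  - apply Rdiv_le_0_compat; [left; apply Hg2pos | ]; lra.
  - apply Rle_div_l; [lra|]. pose proof (Hg2_small (U r) ltac:(lra)). lra.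
Qed.

Lemma X_eq_exp r : 0 < r <= RR -> X r =
  h r / h 0 * exp (- (ln (f M) - ln (f (U r)))) * exp (- (ln (g1 M) - ln (g1 (U r)))).
Proof.
  intros Hr. pose proof (U_gt_t0 r Hr). pose proof h0_pos.
  pose proof (Hfpos M ltac:(lra)). pose proof (Hfpos (U r) ltac:(lra)).
  pose proof (Hg1pos M ltac:(lra)). pose proof (Hg1pos (U r) ltac:(lra)).
  replace (- (ln (f M) - ln (f (U r)))) with (ln (f (U r)) + - ln (f M)) by ring.
  replace (- (ln (g1 M) - ln (g1 (U r)))) with (ln (g1 (U r)) + - ln (g1 M)) by ring.
  unfold X. rewrite !exp_plus, !exp_Ropp, !exp_ln by lra.
  rewrite (f1_eq M), (f1_eq (U r)) by lra. field. repeat split; lra.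
Qed.

Lemma X_bounds r : 0 < r <= RR -> 1/270 <= X r <= 11/10.
Proof.
  intros Hr. pose proof (U_gt_t0 r Hr). pose proof (U_le_M r ltac:(lra)). pose proof h0_pos.
  pose proof (f1_pos (U r) ltac:(lra)). pose proof (f1_pos M HM).
  destruct (Hh_near_0 r Hr) as [[Hh1 Hh2] _]. split.
  - rewrite X_eq_exp by exact Hr.
    pose proof (ln_f_drop r Hr). pose proof (ln_g1_drop r Hr). pose proof (Lam_sqr_le r Hr).
    assert (/ 243 <= exp (- (ln (f M) - ln (f (U r)))) * exp (- (ln (g1 M) - ln (g1 (U r))))).
    { apply Rle_trans with (/ exp 5).
      - apply Rinv_le_contravar; [apply exp_pos | apply exp_5_le].
      - rewrite <- exp_plus, <- exp_Ropp. apply exp_le_mono. nra. }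
    assert (9/10 <= h r / h 0) by (apply (Rle_div_r (9/10)); lra).
    pose proof (exp_pos (- (ln (f M) - ln (f (U r))))).
    pose proof (exp_pos (- (ln (g1 M) - ln (g1 (U r))))).
    rewrite Rmult_assoc. nra.
  - unfold X. apply Rle_div_l; [apply Rmult_lt_0_compat; lra|].
    pose proof (f1_le (U r) M ltac:(lra)). nra.
Qed.

Lemma phi_eq r : phi r = Lam * r ^ 2 * X r.
Proof.
  pose proof h0_pos. pose proof (f1_pos M HM).
  unfold phi, Lam, X. field. lra.
Qed.

Lemma phi_bounds r : 0 < r <= RR -> 0 <= phi r <= 11/10 * Lam * r ^ 2.
Proof.
  intros Hr. rewrite phi_eq. pose proof (X_bounds r Hr). pose proof Lam_pos.
  assert (0 <= Lam * r ^ 2) by (apply Rmult_le_pos; [lra | apply pow2_ge_0]). nra.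
Qed.

Lemma U2_eq r : 0 < r < 1 -> U2 r = (- (r * (L * h r * f (U r))) - U1 r) / r.
Proof. intros Hr. rewrite <- Hode by exact Hr. field. lra. Qed.

Lemma is_derive_psi r : 0 < r <= RR -> is_derive psi r ((phi r - kappa r * psi r ^ 2) / r).
Proof.
  intros Hr. pose proof (U_gt_t0 r Hr). pose proof (Hg1pos (U r) ltac:(lra)).
  destruct (HU r ltac:(lra)) as [DU DU1]. eapply is_derive_eq.
  - apply is_derive_Rmult; [apply is_derive_Rmult|exact DU1].
    + apply is_derive_Ropp, is_derive_Rid.
    + apply (is_derive_Rcomp g1 U); [apply is_derive_g1; lra | exact DU].
  - rewrite (U2_eq r) by lra. unfold phi, kappa, psi. rewrite (f1_eq (U r)) by lra.
    field. lra.
Qed.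

Lemma is_derive_phi r : 0 < r <= RR ->
  is_derive phi r ((2 - (1 + kappa r) * psi r) * phi r / r + phi r * h1 r / h r).
Proof.
  intros Hr. pose proof (U_gt_t0 r Hr). pose proof (Hg1pos (U r) ltac:(lra)).
  pose proof (Hfpos (U r) ltac:(lra)). pose proof (Hhpos r ltac:(lra)).
  destruct (HU r ltac:(lra)) as [DU _]. eapply is_derive_eq.
  - apply is_derive_Rmult; [apply is_derive_Rmult|].
    + apply is_derive_Rscal, is_derive_Rsqr, is_derive_Rid.
    + apply Hh. lra.
    + apply (is_derive_Rcomp f1 U); [apply is_derive_f1; lra | exact DU].
  - unfold phi, kappa, psi. rewrite (f2_eq (U r)), (f1_eq (U r)) by lra. field. lra.
Qed.

Definition E_rate r := (2 - psi r) * kappa r * psi r ^ 2 / r - kappa r * phi r * psi r / r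
  + phi r * h1 r / h r.

Lemma is_derive_E r : 0 < r <= RR -> is_derive E r (E_rate r).
Proof.
  intros Hr. pose proof (Hhpos r ltac:(lra)). unfold E. eapply is_derive_eq.
  - apply is_derive_Rplus; [apply is_derive_Rminus | apply is_derive_phi, Hr].
    + apply (is_derive_Rmult (fun s => psi s ^ 2) (fun _ => / 2)).
      * apply is_derive_Rsqr, is_derive_psi, Hr.
      * apply is_derive_Rconst.
    + apply is_derive_Rscal, is_derive_psi, Hr.
  - unfold E_rate. field. lra.
Qed.

Lemma is_derive_ln_f_drop r : 0 < r <= RR ->
  is_derive (fun s => ln (f M) - ln (f (U s))) r (psi r / r).
Proof.
  intros Hr. pose proof (U_gt_t0 r Hr). pose proof (Hfpos (U r) ltac:(lra)).
  destruct (HU r ltac:(lra)) as [DU _]. eapply is_derive_eq.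
  - apply is_derive_Rminus; [apply is_derive_Rconst|].
    apply (is_derive_Rln (fun s => f (U s))); [|lra].
    apply (is_derive_Rcomp f U); [apply is_derive_f; lra | exact DU].
  - unfold psi. rewrite (f1_eq (U r)) by lra. field. lra.
Qed.

Lemma is_derive_X r : 0 < r <= RR ->
  is_derive X r (X r * (h1 r / h r - (1 + kappa r) * psi r / r)).
Proof.
  intros Hr. pose proof (U_gt_t0 r Hr). pose proof (Hg1pos (U r) ltac:(lra)).
  pose proof (Hfpos (U r) ltac:(lra)). pose proof (Hhpos r ltac:(lra)).
  pose proof h0_pos. pose proof (f1_pos M HM).
  destruct (HU r ltac:(lra)) as [DU _]. unfold X. eapply is_derive_eq.
  - apply (is_derive_Rmult (fun s => h s * f1 (U s)) (fun _ => / (h 0 * f1 M)));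
      [apply is_derive_Rmult | apply is_derive_Rconst].
    + apply Hh. lra.
    + apply (is_derive_Rcomp f1 U); [apply is_derive_f1; lra | exact DU].
  - unfold kappa, psi. rewrite (f2_eq (U r)), (f1_eq (U r)) by lra. field. repeat split; lra.
Qed.

Definition W_rate r := exp (ln (f M) - ln (f (U r))) *
  ((1 - psi r / 4) * E r / (2 * r) + X r * h1 r / h r - X r * kappa r * psi r / r
   - (1 - psi r / 4) * kappa r * psi r ^ 2 / (2 * r)).

Lemma is_derive_W r : 0 < r <= RR -> is_derive W r (W_rate r).
Proof.
  intros Hr. pose proof (Hhpos r ltac:(lra)). unfold W. eapply is_derive_eq.
  - apply (is_derive_Rmult (fun s => exp (ln (f M) - ln (f (U s))))
                           (fun s => X s - (1 - psi s / 4) ^ 2)).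
    + apply is_derive_Rexp, is_derive_ln_f_drop, Hr.
    + apply is_derive_Rminus; [apply is_derive_X, Hr|].
      apply (is_derive_Rsqr (fun s => 1 - psi s / 4)).
      apply is_derive_Rminus; [apply is_derive_Rconst|].
      apply (is_derive_Rmult psi (fun _ => / 4)); [apply is_derive_psi, Hr | apply is_derive_Rconst].
  - unfold W_rate, E. field. lra.
Qed.

Lemma defect_nonneg : 0 <= defect.
Proof.
  pose proof h0_pos. pose proof RR_pos. unfold defect.
  assert (0 <= RR * (C1 / h 0)) by (apply Rmult_le_pos; [lra | apply Rdiv_le_0_compat; lra]).
  lra.
Qed.

Lemma psi_le_Lam_r r : 0 < r <= RR -> psi r <= Lam * r.
Proof.
  intros Hr. pose proof (psi_bounds r Hr). pose proof Lam_pos.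
  assert (Lam * r ^ 2 <= Lam * r) by (apply Rmult_le_compat_l; nra). lra.
Qed.

Lemma E_rate_bound r : 0 < r <= RR -> Rabs (E_rate r) <= 2 * (Lam * defect / 2) * r + 0.
Proof.
  intros Hr. pose proof (U_gt_t0 r Hr). pose proof (U_le_M r ltac:(lra)).
  pose proof h0_pos. pose proof (Hhpos r ltac:(lra)). pose proof (f1_pos (U r) ltac:(lra)).
  pose proof (f1_le (U r) M ltac:(lra)). destruct (Hh_near_0 r Hr) as [_ Hh1].
  replace (2 * (Lam * defect / 2) * r + 0) with (Lam * r * (100 * eps + RR * (C1 / h 0)))
    by (unfold defect; field; lra).
  apply E_rate_estimate; auto using Lam_pos, Lam_sqr_le, psi_bounds, phi_bounds, kappa_bounds; try lra.
  replace (phi r * h1 r / h r) with (L * r ^ 2 * f1 (U r) * h1 r) by (unfold phi; field; lra).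
  rewrite Rabs_mult, Rabs_pos_eq by (apply Rmult_le_pos; [apply Rmult_le_pos|]; nra).
  apply Rle_trans with (L * r ^ 2 * f1 M * C1).
  - assert (0 <= L * r ^ 2) by (apply Rmult_le_pos; [lra | apply pow2_ge_0]).
    apply Rmult_le_compat; [nra | apply Rabs_pos | apply Rmult_le_compat_l | ]; lra.
  - replace (L * r ^ 2 * f1 M * C1) with (Lam * r * (r * (C1 / h 0))) by (unfold Lam; field; lra).
    apply Rmult_le_compat_l; [pose proof Lam_pos; nra|].
    apply Rmult_le_compat_r; [apply Rdiv_le_0_compat|]; lra.
Qed.

Lemma E_vanishes_at_0 e : 0 < e -> exists d, 0 < d /\ forall t, 0 < t < d -> Rabs (E t) <= e.
Proof.
  intros He. pose proof Lam_pos. pose proof RR_pos.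
  exists (Rmin RR (e / (5 * Lam))). split; [apply Rmin_pos; [lra | apply Rdiv_lt_0_compat; lra]|].
  intros t Ht. pose proof (Rmin_l RR (e / (5 * Lam))). pose proof (Rmin_r RR (e / (5 * Lam))).
  assert (Ht' : 0 < t <= RR) by lra.
  pose proof (psi_bounds t Ht'). pose proof (phi_bounds t Ht').
  pose proof (Lam_sqr_le t Ht'). pose proof (psi_le_Lam_r t Ht').
  assert (5 * Lam * t <= e).
  { apply Rle_trans with (5 * Lam * (e / (5 * Lam))); [apply Rmult_le_compat_l; lra|].
    right; field; lra. }
  assert (Lam * t ^ 2 <= Lam * t) by (apply Rmult_le_compat_l; nra).
  unfold E. apply Rabs_le. nra.
Qed.

Lemma E_small r : 0 < r <= RR -> Rabs (E r) <= Lam * defect / 2 * r ^ 2 + 0 * r.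
Proof.
  pose proof Lam_pos. pose proof defect_nonneg. pose proof RR_pos.
  apply (Rabs_le_of_derive_le E E_rate); try lra.
  - apply Rmult_le_pos; nra.
  - intros t Ht. split; [apply is_derive_E | apply E_rate_bound]; exact Ht.
  - exact E_vanishes_at_0.
Qed.

Lemma exp_ln_f_drop_bounds r : 0 < r <= RR -> 1 <= exp (ln (f M) - ln (f (U r))) <= 243.
Proof.
  intros Hr. pose proof (ln_f_drop r Hr). pose proof (Lam_sqr_le r Hr). split.
  - rewrite <- exp_0. apply exp_le_mono. lra.
  - apply Rle_trans with (exp 5); [apply exp_le_mono; lra | apply exp_5_le].
Qed.

Lemma W_rate_bound r : 0 < r <= RR ->
  Rabs (W_rate r) <= 2 * (243 * Lam * defect / 4) * r + 486 * (C1 / h 0).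
Proof.
  intros Hr. pose proof h0_pos. pose proof (exp_ln_f_drop_bounds r Hr).
  pose proof (X_bounds r Hr). pose proof (E_small r Hr). destruct (Hh_near_0 r Hr) as [[Hh1 _] Hh2].
  unfold W_rate. rewrite Rabs_mult, (Rabs_pos_eq (exp _)) by lra.
  apply Rle_trans with (243 * (Lam * defect * r / 2 + 2 * (C1 / h 0))); [|lra].
  apply Rmult_le_compat; [lra | apply Rabs_pos | lra |].
  pose proof (Hhpos r ltac:(lra)). pose proof (Rabs_pos (h1 r)).
  assert (0 <= RR * (C1 / h 0)) by (apply Rmult_le_pos; [pose proof RR_pos | apply Rdiv_le_0_compat]; lra).
  apply (W_rate_estimate _ _ _ _ eps); auto using Lam_pos, psi_bounds, Lam_sqr_le, kappa_bounds; unfold defect in *; lra.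
Qed.

Lemma X_near_1 e : 0 < e -> exists d, 0 < d /\ forall t, 0 < t < d -> Rabs (X t - 1) <= 2 * e.
Proof.
  intros He. pose proof h0_pos. pose proof (f1_pos M HM). pose proof RR_pos.
  destruct (Hh_at_0 (e * h 0) ltac:(nra)) as [dh [Hdh Hdh']].
  destruct (is_derive_eps_delta f1 M (f2 M) (is_derive_f1 M HM) (e * f1 M) ltac:(nra))
    as [df [Hdf Hdf']].
  destruct (HU0 df Hdf) as [dU [HdU HdU']].
  exists (Rmin RR (Rmin dh dU)). split; [apply Rmin_pos; [lra | apply Rmin_pos; lra]|].
  intros t Ht. pose proof (Rmin_l RR (Rmin dh dU)). pose proof (Rmin_r RR (Rmin dh dU)).
  pose proof (Rmin_l dh dU). pose proof (Rmin_r dh dU).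
  assert (Ht' : 0 < t <= RR) by lra.
  pose proof (U_gt_t0 t Ht'). pose proof (U_le_M t ltac:(lra)).
  pose proof (f1_pos (U t) ltac:(lra)). pose proof (f1_le (U t) M ltac:(lra)).
  specialize (Hdh' t ltac:(lra)). destruct (HdU' t ltac:(lra)) as [HUt _].
  specialize (Hdf' (U t) HUt).
  unfold X. replace (h t * f1 (U t) / (h 0 * f1 M) - 1) with
    ((h t - h 0) / h 0 * (f1 (U t) / f1 M) + (f1 (U t) - f1 M) / f1 M) by (field; lra).
  assert (Hq1 : Rabs ((h t - h 0) / h 0) <= e).
  { unfold Rdiv. rewrite Rabs_mult, Rabs_inv, (Rabs_pos_eq (h 0)) by lra.
    apply Rle_div_l; lra. }
  assert (Hq2 : 0 <= f1 (U t) / f1 M <= 1).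
  { split; [apply Rdiv_le_0_compat | apply Rle_div_l]; lra. }
  assert (Hq3 : Rabs ((f1 (U t) - f1 M) / f1 M) <= e).
  { unfold Rdiv. rewrite Rabs_mult, Rabs_inv, (Rabs_pos_eq (f1 M)) by lra.
    apply Rle_div_l; lra. }
  eapply Rle_trans; [apply Rabs_triang|]. rewrite (Rabs_mult _ (f1 (U t) / f1 M)).
  rewrite (Rabs_pos_eq (f1 (U t) / f1 M)) by lra.
  pose proof (Rabs_pos ((h t - h 0) / h 0)). nra.
Qed.

Lemma W_vanishes_at_0 e : 0 < e -> exists d, 0 < d /\ forall t, 0 < t < d -> Rabs (W t) <= e.
Proof.
  intros He. pose proof Lam_pos. pose proof RR_pos. set (e1 := e / 729).
  destruct (X_near_1 e1 ltac:(unfold e1; lra)) as [dX [HdX HdX']].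
  exists (Rmin RR (Rmin dX (e1 / Lam))).
  split; [apply Rmin_pos; [lra | apply Rmin_pos; [lra | apply Rdiv_lt_0_compat; unfold e1; lra]]|].
  intros t Ht. pose proof (Rmin_l RR (Rmin dX (e1 / Lam))). pose proof (Rmin_r RR (Rmin dX (e1 / Lam))).
  pose proof (Rmin_l dX (e1 / Lam)). pose proof (Rmin_r dX (e1 / Lam)).
  assert (Ht' : 0 < t <= RR) by lra.
  pose proof (exp_ln_f_drop_bounds t Ht'). pose proof (psi_bounds t Ht').
  pose proof (psi_le_Lam_r t Ht'). pose proof (Lam_sqr_le t Ht'). specialize (HdX' t ltac:(lra)).
  assert (Lam * t <= e1).
  { apply Rle_trans with (Lam * (e1 / Lam)); [apply Rmult_le_compat_l; lra | right; field; lra]. }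
  assert (Hy : Rabs (1 - (1 - psi t / 4) ^ 2) <= e1).
  { replace (1 - (1 - psi t / 4) ^ 2) with (psi t * (1/2 - psi t / 16)) by field.
    apply Rabs_le. nra. }
  unfold W. rewrite Rabs_mult, (Rabs_pos_eq (exp _)) by lra.
  replace (X t - (1 - psi t / 4) ^ 2) with ((X t - 1) + (1 - (1 - psi t / 4) ^ 2)) by ring.
  pose proof (Rabs_triang (X t - 1) (1 - (1 - psi t / 4) ^ 2)).
  apply Rle_trans with (243 * (3 * e1)); [|unfold e1; lra].
  apply Rmult_le_compat; [lra | apply Rabs_pos | lra | lra].
Qed.

Lemma W_small r : 0 < r <= RR ->
  Rabs (W r) <= 243 * Lam * defect / 4 * r ^ 2 + 486 * (C1 / h 0) * r.
Proof.
  pose proof Lam_pos. pose proof defect_nonneg. pose proof RR_pos. pose proof h0_pos.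
  apply (Rabs_le_of_derive_le W W_rate); try lra.
  - apply Rmult_le_pos; nra.
  - apply Rmult_le_pos; [lra | apply Rdiv_le_0_compat; lra].
  - intros t Ht. split; [apply is_derive_W | apply W_rate_bound]; exact Ht.
  - exact W_vanishes_at_0.
Qed.

Lemma E_le_defect r : 0 < r <= RR -> Rabs (E r) <= 8 * defect.
Proof.
  intros Hr. pose proof (E_small r Hr). pose proof (Lam_sqr_le r Hr). pose proof defect_nonneg.
  assert (Lam * r ^ 2 * defect <= 16 * defect) by (apply Rmult_le_compat_r; lra). nra.
Qed.

Lemma X_sub_sqr_le_defect r : 0 < r <= RR -> Rabs (X r - (1 - psi r / 4) ^ 2) <= 1458 * defect.
Proof.
  intros Hr. pose proof (W_small r Hr). pose proof (exp_ln_f_drop_bounds r Hr).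
  pose proof (Lam_sqr_le r Hr). pose proof defect_nonneg. pose proof h0_pos.
  assert (Lam * r ^ 2 * defect <= 16 * defect) by (apply Rmult_le_compat_r; lra).
  assert (r * (C1 / h 0) <= RR * (C1 / h 0)) by (apply Rmult_le_compat_r; [apply Rdiv_le_0_compat|]; lra).
  unfold W in H. rewrite Rabs_mult, (Rabs_pos_eq (exp _)) in H by lra.
  pose proof (Rabs_pos (X r - (1 - psi r / 4) ^ 2)). unfold defect in *. nra.
Qed.

Lemma E_eq r : E r = phi r - 8 * (1 - psi r / 4) * (1 - (1 - psi r / 4)).
Proof. unfold E. field. Qed.

Lemma phi_near_profile r : 0 < r <= RR -> 1458 * defect <= 1/2700 ->
  Rabs (phi r - 64 * (Lam * r ^ 2) / (8 + Lam * r ^ 2) ^ 2) <= 1000 * (1458 * defect).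
Proof.
  intros Hr Hd. pose proof (E_le_defect r Hr). pose proof defect_nonneg.
  pose proof (psi_bounds r Hr). pose proof (X_bounds r Hr). pose proof (Lam_sqr_le r Hr).
  pose proof (Rmult_le_pos _ _ (Rlt_le _ _ Lam_pos) (pow2_ge_0 r)).
  apply (liouville_profile_estimate (1 - psi r / 4) (X r)); try lra.
  - apply X_sub_sqr_le_defect, Hr.
  - rewrite <- E_eq. lra.
  - apply phi_eq.
Qed.

Lemma sqrt_Lam_pos : 0 < sqrt Lam.
Proof. apply sqrt_lt_R0, Lam_pos. Qed.

Lemma phi_near_profile_at c : 0 < c <= 4 -> 1458 * defect <= 1/2700 ->
  Rabs (phi (c / sqrt Lam) - 64 * c ^ 2 / (8 + c ^ 2) ^ 2) <= 1000 * (1458 * defect).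
Proof.
  intros Hc Hd. pose proof sqrt_Lam_pos. pose proof Lam_pos.
  assert (Hs : sqrt Lam * sqrt Lam = Lam) by (apply sqrt_sqrt; lra).
  assert (Hc2 : Lam * (c / sqrt Lam) ^ 2 = c ^ 2) by (rewrite <- Hs at 1; field; lra).
  rewrite <- Hc2. apply phi_near_profile; [|exact Hd]. split.
  - apply Rdiv_lt_0_compat; lra.
  - rewrite HRR. fold Lam. apply Rmult_le_compat_r; [left; apply Rinv_0_lt_compat|]; lra.
Qed.

Lemma phi_profile_values : 1458 * defect <= 1/2700 ->
  Rabs (phi (2 / sqrt Lam) - 16/9) <= 1000 * (1458 * defect) /\
  Rabs (phi (sqrt 8 / sqrt Lam) - 2) <= 1000 * (1458 * defect) /\
  Rabs (phi (4 / sqrt Lam) - 16/9) <= 1000 * (1458 * defect).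
Proof.
  intros Hd. assert (H8 : sqrt 8 ^ 2 = 8) by (apply pow2_sqrt; lra).
  assert (Hs8 : 0 < sqrt 8 <= 4).
  { split; [apply sqrt_lt_R0; lra|]. rewrite <- (sqrt_pow2 4) by lra. apply sqrt_le_1_alt. lra. }
  pose proof (phi_near_profile_at 2 ltac:(lra) Hd) as P2.
  pose proof (phi_near_profile_at (sqrt 8) Hs8 Hd) as P8.
  pose proof (phi_near_profile_at 4 ltac:(lra) Hd) as P4.
  rewrite H8 in P8.
  replace (64 * 2 ^ 2 / (8 + 2 ^ 2) ^ 2) with (16/9) in P2 by field.
  replace (64 * 8 / (8 + 8) ^ 2) with 2 in P8 by field.
  replace (64 * 4 ^ 2 / (8 + 4 ^ 2) ^ 2) with (16/9) in P4 by field.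
  auto.
Qed.

Lemma max_point_interior r : max_on phi (2 / sqrt Lam) (4 / sqrt Lam) r ->
  1458 * defect <= 1/10000 -> 2 / sqrt Lam < r < 4 / sqrt Lam.
Proof.
  intros [Hr Hmax] Hd. pose proof sqrt_Lam_pos. pose proof defect_nonneg.
  destruct (phi_profile_values ltac:(lra)) as [P2 [P8 P4]].
  apply Rabs_le_between in P2. apply Rabs_le_between in P8. apply Rabs_le_between in P4.
  assert (H8 : 2 < sqrt 8 < 4).
  { split; [rewrite <- (sqrt_pow2 2) by lra | rewrite <- (sqrt_pow2 4) by lra];
      apply sqrt_lt_1_alt; lra. }
  assert (Hm : 2 / sqrt Lam < sqrt 8 / sqrt Lam < 4 / sqrt Lam).
  { split; apply Rmult_lt_compat_r; try (apply Rinv_0_lt_compat; lra); lra. }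
  assert (Hpeak : phi (sqrt 8 / sqrt Lam) <= phi r) by (apply Hmax; lra).
  split.
  - destruct (Rle_lt_or_eq_dec _ _ (proj1 Hr)) as [Hlt|Heq]; [exact Hlt|]. rewrite <- Heq in Hpeak. lra.
  - destruct (Rle_lt_or_eq_dec _ _ (proj2 Hr)) as [Hlt|Heq]; [exact Hlt|]. rewrite Heq in Hpeak. lra.
Qed.

Lemma max_point_critical r : max_on phi (2 / sqrt Lam) (4 / sqrt Lam) r ->
  1458 * defect <= 1/10000 -> is_derive phi r 0.
Proof.
  intros Hmax Hd. pose proof (max_point_interior r Hmax Hd) as Hr.
  assert (Hr' : 0 < r <= RR).
  { pose proof sqrt_Lam_pos. rewrite HRR. fold Lam. split; [|lra].
    apply Rlt_trans with (2 / sqrt Lam); [apply Rdiv_lt_0_compat |]; lra. }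
  pose proof (is_derive_phi r Hr') as D.
  rewrite (derive_max_eq_0 phi (2 / sqrt Lam) (4 / sqrt Lam) r _ Hr D) in D; [exact D|].
  intros x Hx. apply (proj2 Hmax). lra.
Qed.

Lemma max_point_profile r z : max_on phi (2 / sqrt Lam) (4 / sqrt Lam) r ->
  0 < z <= 1 -> 1458 * defect <= z ^ 2 / 100000000 ->
  Rabs (phi r - 2) < z /\ Rabs (psi r - 2) < z /\ Rabs (r * sqrt Lam - 2 * sqrt 2) < z.
Proof.
  intros Hmax Hz Hd. pose proof sqrt_Lam_pos. pose proof defect_nonneg. pose proof Lam_pos.
  assert (Hd' : 1458 * defect <= 1/10000) by nra.
  pose proof (max_point_interior r Hmax Hd') as Hr.
  assert (Hr' : 0 < r <= RR).
  { rewrite HRR. fold Lam. split; [|lra].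
    apply Rlt_trans with (2 / sqrt Lam); [apply Rdiv_lt_0_compat |]; lra. }
  destruct (phi_profile_values ltac:(lra)) as [_ [P8 _]]. apply Rabs_le_between in P8.
  assert (H8 : 2 / sqrt Lam <= sqrt 8 / sqrt Lam <= 4 / sqrt Lam).
  { assert (2 <= sqrt 8 <= 4).
    { split; [rewrite <- (sqrt_pow2 2) by lra | rewrite <- (sqrt_pow2 4) by lra];
        apply sqrt_le_1_alt; lra. }
    split; apply Rmult_le_compat_r; try (left; apply Rinv_0_lt_compat; lra); lra. }
  pose proof (proj2 Hmax _ H8).
  pose proof (psi_bounds r Hr'). pose proof (X_bounds r Hr'). pose proof (Lam_sqr_le r Hr').
  pose proof (E_le_defect r Hr'). pose proof (pow2_ge_0 r).
  assert (0 <= Lam * r ^ 2) by (apply Rmult_le_pos; lra).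
  destruct (liouville_profile_at_max (1 - psi r / 4) (X r) (phi r) (Lam * r ^ 2) (1458 * defect) z)
    as [Z1 [Z2 Z3]]; try lra.
  - apply X_sub_sqr_le_defect, Hr'.
  - rewrite <- E_eq. lra.
  - apply phi_eq.
  - split; [exact Z1|]. split; [replace (psi r - 2) with (4 - 4 * (1 - psi r / 4) - 2) by field; exact Z2|].
    rewrite sqrt_mult, sqrt_pow2 in Z3 by (try apply pow2_ge_0; lra).
    replace (2 * sqrt 2) with (sqrt 8); [rewrite Rmult_comm; exact Z3|].
    replace 8 with (2 ^ 2 * 2) by ring. rewrite sqrt_mult, sqrt_pow2 by (try apply pow2_ge_0; lra).
    reflexivity.
Qed.

Lemma g1_ratio_bounds r : 0 < r <= RR -> exp (- (5 * eps)) <= g1 (U r) / g1 M <= 1.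
Proof.
  intros Hr. pose proof (ln_g1_drop r Hr). pose proof (U_gt_t0 r Hr).
  pose proof (Hg1pos M ltac:(lra)). pose proof (Hg1pos (U r) ltac:(lra)).
  replace (g1 (U r) / g1 M) with (exp (- (ln (g1 M) - ln (g1 (U r))))).
  - split; [apply exp_le_mono; lra|]. rewrite <- exp_0. apply exp_le_mono. lra.
  - replace (- (ln (g1 M) - ln (g1 (U r)))) with (ln (g1 (U r)) + - ln (g1 M)) by ring.
    rewrite exp_plus, exp_Ropp, !exp_ln by lra. field. lra.
Qed.

Definition max_point_facts r z : Prop :=
  (2 / sqrt Lam < r < 4 / sqrt Lam /\ is_derive phi r 0 /\
   forall x, 2 / sqrt Lam < x < 4 / sqrt Lam -> t0 <= U x) /\
  (Rabs (phi r - 2) < z /\ Rabs (psi r - 2) < z /\ Rabs (r * sqrt Lam - 2 * sqrt 2) < z) /\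
  (0 <= M - U r <= 5 / g1 M /\ 0 <= ln (f M) - ln (f (U r)) <= 5 /\
   exp (- (5 * eps)) <= g1 (U r) / g1 M <= 1).

Lemma max_point_estimates r z : max_on phi (2 / sqrt Lam) (4 / sqrt Lam) r ->
  0 < z <= 1 -> 1458 * defect <= z ^ 2 / 100000000 -> max_point_facts r z.
Proof.
  intros Hmax Hz Hd. pose proof sqrt_Lam_pos. pose proof defect_nonneg.
  assert (Hd' : 1458 * defect <= 1/10000) by nra.
  pose proof (max_point_interior r Hmax Hd') as Hr.
  assert (Hin : forall x, 2 / sqrt Lam < x < 4 / sqrt Lam -> 0 < x <= RR).
  { intros x Hx. rewrite HRR. fold Lam. split; [|lra].
    apply Rlt_trans with (2 / sqrt Lam); [apply Rdiv_lt_0_compat |]; lra. }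
  pose proof (Hin r Hr) as Hr'. pose proof (Lam_sqr_le r Hr'). pose proof (ln_f_drop r Hr').
  split; [|split].
  - split; [exact Hr|]. split; [apply max_point_critical; assumption|].
    intros x Hx. pose proof (U_gt_t0 x (Hin x Hx)). lra.
  - apply max_point_profile; assumption.
  - split; [pose proof (U_le_M r ltac:(lra)); pose proof (U_near_M r Hr'); lra|].
    split; [nra | apply g1_ratio_bounds, Hr'].
Qed.

End BlowUpRegion.
(** * The sequence of solutions *)

Section SolutionSequence.

Variables (q : R) (h h1 : R -> R) (lam mu : nat -> R) (u u1 u2 : nat -> R -> R).
Hypothesis Hq : 1 <= q.
Hypothesis Hlimq : is_lim (fun t => (g1 t)^2 / (ln (f t) * g2 t)) p_infty (Finite q).
Hypothesis Hh : C1_with (Icc 0 1) h h1.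
Hypothesis Hhpos : forall r, 0 <= r <= 1 -> 0 < h r.
Hypothesis Hf : C1_with (Ici 0) f f1.
Hypothesis Hfnn : forall t, 0 <= t -> 0 <= f t.
Hypothesis Ht0 : 0 <= t0.
Hypothesis Hlam : forall n, 0 < lam n.
Hypothesis Hu : forall n, C2_with (Icc 0 1) (u n) (u1 n) (u2 n).
Hypothesis Hode : forall n r, 0 < r < 1 -> - u2 n r - / r * u1 n r = lam n * h r * f (u n r).
Hypothesis Hupos : forall n r, 0 < r < 1 -> 0 < u n r.
Hypothesis Hu0 : forall n, u n 0 = mu n.
Hypothesis Hu10 : forall n, u1 n 0 = 0.
Hypothesis Hu1 : forall n, u n 1 = 0.
Hypothesis Hmuinf : is_lim_seq mu p_infty.

Definition Lam_seq n := lam n * h 0 * f1 (mu n).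
Definition phi_seq n x := lam n * x ^ 2 * h x * f1 (u n x).
Definition max_point n r := max_on (phi_seq n) (2 / sqrt (Lam_seq n)) (4 / sqrt (Lam_seq n)) r.

Lemma h0_pos_seq : 0 < h 0.
Proof. apply Hhpos; lra. Qed.

Lemma sol_is_derive n r : 0 < r < 1 -> is_derive (u n) r (u1 n r) /\ is_derive (u1 n) r (u2 n r).
Proof. apply C2_with_Icc_is_derive, Hu. Qed.

Lemma sol_ode n r : 0 < r < 1 -> u1 n r + r * u2 n r = - (r * (lam n * h r * f (u n r))).
Proof. intros Hr. apply radial_ode_divergence_form; [lra | apply Hode, Hr]. Qed.

Lemma sol_at_0 n e : 0 < e -> exists d, 0 < d /\
  forall t, 0 < t < d -> Rabs (u n t - mu n) < e /\ Rabs (u1 n t) < e.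
Proof.
  intros He. destruct (C2_with_Icc_limits_at_0 _ _ _ e (Hu n) He) as [d [Hd H]].
  exists d. split; [exact Hd|]. intros t Ht. specialize (H t Ht).
  rewrite Hu0, Hu10, Rminus_0_r in H. exact H.
Qed.

Lemma sol_source_nonneg n r : 0 < r < 1 -> 0 <= lam n * h r * f (u n r).
Proof.
  intros Hr. pose proof (Hlam n). pose proof (Hhpos r ltac:(lra)).
  pose proof (Hfnn (u n r) (Rlt_le _ _ (Hupos n r Hr))).
  apply Rmult_le_pos; [apply Rmult_le_pos|]; lra.
Qed.

Lemma sol_near_1 n e : 0 < e -> exists r, 0 < r < 1 /\ u n r < e.
Proof.
  intros He. destruct (Hu n) as [HdU _].
  destruct (deriv_within_eps_delta _ _ _ 1 HdU ltac:(unfold Icc; lra) e He) as [d [Hd Hd']].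
  pose proof (Rmax_l (1/2) (1 - d / 2)). pose proof (Rmax_r (1/2) (1 - d / 2)).
  set (r := Rmax (1/2) (1 - d / 2)) in *. exists r.
  assert (Hr : r < 1) by (unfold r, Rmax; destruct Rle_dec; lra).
  split; [lra|].
  assert (Hr' : Rabs (r - 1) < d) by (rewrite Rabs_left; lra).
  assert (Ir : Icc 0 1 r) by (unfold Icc; lra).
  specialize (Hd' r Ir Hr'). rewrite Hu1 in Hd'.
  apply Rabs_def2 in Hd'. lra.
Qed.

Lemma mu_eventually_ge K : eventually (fun n => K <= mu n).
Proof.
  apply is_lim_seq_spec in Hmuinf. destruct (Hmuinf K) as [N HN].
  exists N. intros n Hn. left. apply HN, Hn.
Qed.

Lemma ln_f_mu_eventually_ge K : eventually (fun n => t0 + 1 <= mu n /\ K <= ln (f (mu n))).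
Proof.
  destruct (ln_f_unbounded K) as [T [HT HT']].
  eapply filter_imp; [|apply (mu_eventually_ge T)]. intros n Hn. split; [lra | apply HT', Hn].
Qed.

Lemma f_bounded_near_0 : exists Mf0, forall t, 0 <= t <= t0 + 1 -> f t <= Mf0.
Proof.
  destruct Hf as [Hfd _]. apply continuous_on_bounded_above; [lra|].
  intros x Hx e He.
  destruct (deriv_within_eps_delta _ _ _ x Hfd ltac:(unfold Ici; lra) e He) as [d [Hd Hd']].
  exists d. split; [exact Hd|]. intros y Hy Hyx. apply Hd'; [unfold Ici; lra | exact Hyx].
Qed.

Lemma h_bounded : exists Hsup, forall r, 0 <= r <= 1 -> h r <= Hsup.
Proof.
  destruct Hh as [Hhd _]. apply continuous_on_bounded_above; [lra|].
  intros x Hx e He. apply (deriv_within_eps_delta _ _ _ x Hhd); [exact Hx | exact He].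
Qed.

Lemma phi_seq_max_exists n a b : 0 < a <= b -> b < 1 -> exists r, max_on (phi_seq n) a b r.
Proof.
  intros Hab Hb. apply max_on_exists; [lra|]. intros x Hx. unfold phi_seq.
  destruct Hh as [Hhd _]. destruct Hf as [_ Hf1c].
  apply continuity_pt_mult; [apply continuity_pt_mult; [apply continuity_pt_mult|]|].
  - apply continuity_pt_const. intros ? ?; reflexivity.
  - apply is_derive_continuity_pt with (2 * x * 1). apply (is_derive_Rsqr (fun y => y)), is_derive_Rid.
  - apply is_derive_continuity_pt with (h1 x). apply deriv_within_Icc_is_derive; [exact Hhd | lra].
  - apply (continuity_pt_comp (u n) f1).
    + apply is_derive_continuity_pt with (u1 n x). apply sol_is_derive. lra.
    + apply continuous_within_Ici_continuity_pt; [exact Hf1c | apply Hupos; lra].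
Qed.

Definition blowup_point n r z : Prop :=
  (0 < r < 1 /\
   (exists delta, 0 < delta /\ forall x, 0 <= x <= 1 -> Rabs (x - r) < delta ->
      t0 <= u n x /\ phi_seq n x <= phi_seq n r) /\
   is_derive (phi_seq n) r 0) /\
  Rabs (phi_seq n r - 2) < z /\
  Rabs (- r * g1 (u n r) * u1 n r - 2) < z /\
  Rabs (r / / sqrt (Lam_seq n) - 2 * sqrt 2) < z /\
  Rabs (u n r - mu n) <= 5 * Rabs (/ ln (f (mu n))) * Rabs (ln (f (mu n)) / g1 (mu n)) /\
  Rabs (ln (f (u n r)) / ln (f (mu n)) - 1) < z /\
  Rabs (g1 (u n r) / g1 (mu n) - 1) < z.

Lemma blowup_point_of_estimates n r z eps : 0 < z <= 1 -> 0 < eps -> 5 * eps < z ->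
  0 < Lam_seq n -> 4 / sqrt (Lam_seq n) < 1 -> 0 < g1 (mu n) -> 10 / z <= ln (f (mu n)) ->
  max_point n r -> max_point_facts h (u n) (u1 n) (lam n) (mu n) eps r z ->
  blowup_point n r z.
Proof.
  intros Hz Heps Heps5 HLam Hs Hg1M HlnM Hmax Hfacts. unfold max_point_facts in Hfacts.
  change (Lam h (lam n) (mu n)) with (Lam_seq n) in Hfacts.
  change (phi h (u n) (lam n)) with (phi_seq n) in Hfacts.
  destruct Hfacts as [[Hr [Hd Hloc]] [[P1 [P2 P3]] [M1 [M2 M3]]]].
  pose proof (sqrt_lt_R0 _ HLam) as Hs0.
  assert (H2s : 0 < 2 / sqrt (Lam_seq n)) by (apply Rdiv_lt_0_compat; lra).
  assert (HlnM0 : 0 < ln (f (mu n))) by (apply Rlt_le_trans with (10 / z); [apply Rdiv_lt_0_compat|]; lra).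
  split; [split; [lra|] | repeat split; [exact P1 | exact P2 | | | |]].
  - split; [|exact Hd].
    destruct (local_max_of_interior_max _ (u n) _ _ r t0 Hmax Hr Hloc) as [delta [Hdelta Hx]].
    exists delta. split; [exact Hdelta|]. intros x _ Hxr. apply Hx, Hxr.
  - replace (r / / sqrt (Lam_seq n)) with (r * sqrt (Lam_seq n)) by (field; lra). exact P3.
  - rewrite Rabs_left1, Rabs_inv, !Rabs_pos_eq by (try apply Rdiv_le_0_compat; lra).
    replace (5 * / ln (f (mu n)) * (ln (f (mu n)) / g1 (mu n))) with (5 / g1 (mu n)) by (field; lra).
    lra.
  - replace (ln (f (u n r)) / ln (f (mu n)) - 1)
      with (- ((ln (f (mu n)) - ln (f (u n r))) / ln (f (mu n)))) by (field; lra).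
    rewrite Rabs_Ropp, Rabs_pos_eq by (apply Rdiv_le_0_compat; lra).
    apply Rle_lt_trans with (5 / ln (f (mu n))).
    + apply Rmult_le_compat_r; [left; apply Rinv_0_lt_compat|]; lra.
    + apply Rlt_div_l; [lra|]. apply Rle_div_l in HlnM; [nra | lra].
  - pose proof (exp_ineq1_le (- (5 * eps))). apply Rabs_lt_between. lra.
Qed.

Section ChosenConstants.

Variables (Hsup Mf0 dh C1 : R).
Hypothesis HHsup : forall r, 0 <= r <= 1 -> h r <= Hsup.
Hypothesis HMf0 : forall t, 0 <= t <= t0 + 1 -> f t <= Mf0.
Hypothesis Hdh : 0 < dh <= 1.
Hypothesis HC1 : 0 <= C1.
Hypothesis Hh_near_0 : forall r, 0 <= r < dh ->
  (9/10 * h 0 <= h r <= 11/10 * h 0) /\ Rabs (h1 r) <= C1.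

Lemma f_le_at_large_center M : t0 + 1 <= M -> Mf0 <= f M -> forall s, 0 <= s <= M -> f s <= f M.
Proof.
  intros HM HfM s Hs. destruct (Rle_or_lt s (t0 + 1)) as [Hs1|Hs1].
  - specialize (HMf0 s ltac:(lra)). lra.
  - apply f_le. lra.
Qed.

Lemma Lam_seq_ge n : t0 + 1 <= mu n -> Mf0 <= f (mu n) ->
  4 * mu n * h 0 * g1 (t0 + 1) / Hsup <= Lam_seq n.
Proof.
  intros HM HfM. pose proof h0_pos_seq. pose proof (Hlam n).
  assert (HHs : 0 < Hsup) by (specialize (HHsup 0 ltac:(lra)); lra).
  pose proof (Hfpos (mu n) ltac:(lra)). pose proof (Hg1pos (t0 + 1) ltac:(lra)).
  assert (Hc : mu n <= lam n * Hsup * f (mu n) / 4).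
  { apply (center_le_of_vanishing_at_1 (u n) (u1 n) (u2 n) (fun t => lam n * h t * f (u n t)) (mu n)
             (sol_is_derive n) (sol_ode n) (sol_source_nonneg n) (sol_at_0 n)).
    - intros t Ht. pose proof (Hupos n t Ht).
      pose proof (U_le_center (u n) (u1 n) (u2 n) _ (mu n) (sol_is_derive n) (sol_ode n)
                    (sol_source_nonneg n) (sol_at_0 n) t Ht).
      pose proof (Hhpos t ltac:(lra)). pose proof (HHsup t ltac:(lra)).
      pose proof (Hfnn (u n t) ltac:(lra)).
      pose proof (f_le_at_large_center (mu n) HM HfM (u n t) ltac:(lra)).
      apply Rmult_le_compat; [nra | lra | apply Rmult_le_compat_l | ]; lra.
    - apply sol_near_1. }
  unfold Lam_seq. rewrite (f1_eq (mu n)) by lra.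
  pose proof (g1_le (t0 + 1) (mu n) ltac:(lra)).
  replace (4 * mu n * h 0 * g1 (t0 + 1) / Hsup) with ((4 * mu n / Hsup) * (h 0 * g1 (t0 + 1)))
    by (field; lra).
  replace (lam n * h 0 * (f (mu n) * g1 (mu n))) with ((lam n * f (mu n)) * (h 0 * g1 (mu n)))
    by ring.
  assert (4 * mu n / Hsup <= lam n * f (mu n)) by (apply Rle_div_l; lra).
  apply Rmult_le_compat; [apply Rdiv_le_0_compat; lra | nra | lra | apply Rmult_le_compat_l; lra].
Qed.

Lemma Lam_seq_eventually_gt K : eventually (fun n => K < Lam_seq n).
Proof.
  pose proof h0_pos_seq. assert (HHs : 0 < Hsup) by (specialize (HHsup 0 ltac:(lra)); lra).
  assert (HMf : 0 < Mf0) by (specialize (HMf0 t0 ltac:(lra)); pose proof (Hfpos t0 ltac:(lra)); lra).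
  pose proof (Hg1pos (t0 + 1) ltac:(lra)).
  set (mb := Rabs K * Hsup / (4 * h 0 * g1 (t0 + 1)) + 1).
  eapply filter_imp; [|apply filter_and; [apply (mu_eventually_ge mb) | apply (ln_f_mu_eventually_ge (ln Mf0))]].
  intros n [Hmb [HM HlnM]].
  assert (HfM : Mf0 <= f (mu n)).
  { rewrite <- (exp_ln Mf0), <- (exp_ln (f (mu n))) by (try apply Hfpos; lra).
    apply exp_le_mono, HlnM. }
  pose proof (Lam_seq_ge n HM HfM). pose proof (Rle_abs K).
  assert (Hmb' : Rabs K * Hsup / (4 * h 0 * g1 (t0 + 1)) < mu n) by (unfold mb in Hmb; lra).
  apply Rlt_div_l in Hmb'; [|apply Rmult_lt_0_compat; lra].
  assert (Rabs K < 4 * mu n * h 0 * g1 (t0 + 1) / Hsup); [|lra].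
  apply Rlt_div_r; [lra | nra].
Qed.

Lemma RR_eventually_lt delta : 0 < delta -> eventually (fun n => 4 / sqrt (Lam_seq n) < delta).
Proof.
  intros Hdelta. assert (H4 : 0 < 4 / delta) by (apply Rdiv_lt_0_compat; lra).
  eapply filter_imp; [|apply (Lam_seq_eventually_gt ((4 / delta) ^ 2))]. intros n Hn.
  pose proof (sqrt_gt_of_sqr_lt _ _ H4 Hn) as Hs.
  assert (0 < sqrt (Lam_seq n)) by lra.
  apply Rlt_div_l in Hs; [|lra]. apply Rlt_div_l; lra.
Qed.

Lemma sol_max_point_estimates n eps T r z :
  0 < eps <= 1/100 -> t0 < T -> (forall t, T <= t -> g2 t <= eps * g1 t ^ 2) ->
  T + 5 / g1 (t0 + 1) <= mu n -> t0 + 1 <= mu n -> Mf0 <= f (mu n) ->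
  4 / sqrt (Lam_seq n) < dh -> max_point n r ->
  0 < z <= 1 -> 1458 * (100 * eps + 4 / sqrt (Lam_seq n) * (C1 / h 0)) <= z ^ 2 / 100000000 ->
  max_point_facts h (u n) (u1 n) (lam n) (mu n) eps r z.
Proof.
  intros Heps HT Hg2T HTM HM HfM HRR Hmax Hz Hd. destruct Hh as [Hhd _].
  pose proof (g1_le (t0 + 1) (mu n) ltac:(lra)). pose proof (Hg1pos (t0 + 1) ltac:(lra)).
  assert (5 / g1 (mu n) <= 5 / g1 (t0 + 1)).
  { apply Rmult_le_compat_l; [lra | apply Rinv_le_contravar; lra]. }
  apply (max_point_estimates h h1 (u n) (u1 n) (u2 n) (lam n) (mu n) T eps (4 / sqrt (Lam_seq n)) C1);
    auto; try lra.
  - intros r' Hr'. apply Hhpos. lra.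
  - intros r' Hr'. apply deriv_within_Icc_is_derive; [exact Hhd | exact Hr'].
  - apply C1_with_Icc_continuous_at_0 with h1, Hh.
  - intros r' Hr'. apply Hh_near_0. lra.
  - apply sol_is_derive.
  - apply sol_ode.
  - apply sol_at_0.
  - apply f_le_at_large_center; assumption.
Qed.

Lemma sequence_estimates z : 0 < z <= 1 -> eventually (fun n =>
  (exists r, max_point n r) /\ forall r, max_point n r -> blowup_point n r z).
Proof.
  intros Hz. pose proof h0_pos_seq. assert (Hz2 : 0 < z ^ 2 <= 1) by (split; nra).
  (* [eps] and [delta] are chosen so that [1458 * defect <= z ^ 2 / 10 ^ 8] below. *)
  set (eps := z ^ 2 / 100000000000000).
  destruct (g2_le_eps_g1_sqr q Hq Hlimq eps ltac:(unfold eps; lra)) as [T [HT HTe]].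
  set (delta := Rmin dh (z ^ 2 * h 0 / (1000000000000 * (C1 + 1)))).
  assert (Hdelta : 0 < delta <= z ^ 2 * h 0 / (1000000000000 * (C1 + 1)) /\ delta <= dh).
  { split; [split|]; [apply Rmin_pos; [lra | apply Rdiv_lt_0_compat; nra] | apply Rmin_r | apply Rmin_l]. }
  eapply filter_imp; [|apply filter_and; [apply (mu_eventually_ge (T + 5 / g1 (t0 + 1))) |
    apply filter_and; [apply (ln_f_mu_eventually_ge (Rmax (ln Mf0) (10 / z))) |
                       apply (RR_eventually_lt delta (proj1 (proj1 Hdelta)))]]].
  intros n [HTn [[HM Hln] HRR]].
  pose proof (Rmax_l (ln Mf0) (10 / z)). pose proof (Rmax_r (ln Mf0) (10 / z)).
  pose proof (Hfpos (mu n) ltac:(lra)). pose proof (Hg1pos (mu n) ltac:(lra)).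
  assert (HfM : Mf0 <= f (mu n)).
  { assert (HMf : 0 < Mf0) by (specialize (HMf0 t0 ltac:(lra)); pose proof (Hfpos t0 ltac:(lra)); lra).
    rewrite <- (exp_ln Mf0), <- (exp_ln (f (mu n))) by lra. apply exp_le_mono. lra. }
  assert (HLam : 0 < Lam_seq n).
  { pose proof (Hlam n). pose proof (f1_pos (mu n) ltac:(lra)).
    unfold Lam_seq. apply Rmult_lt_0_compat; [apply Rmult_lt_0_compat|]; lra. }
  pose proof (sqrt_lt_R0 _ HLam).
  assert (H2s : 2 / sqrt (Lam_seq n) <= 4 / sqrt (Lam_seq n)).
  { apply Rmult_le_compat_r; [left; apply Rinv_0_lt_compat|]; lra. }
  assert (HRRC : 4 / sqrt (Lam_seq n) * (C1 / h 0) <= z ^ 2 / 1000000000000).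
  { apply Rle_trans with (z ^ 2 * h 0 / (1000000000000 * (C1 + 1)) * (C1 / h 0)).
    - apply Rmult_le_compat_r; [apply Rdiv_le_0_compat|]; lra.
    - replace (z ^ 2 * h 0 / (1000000000000 * (C1 + 1)) * (C1 / h 0))
        with (z ^ 2 / 1000000000000 * (C1 / (C1 + 1))) by (field; lra).
      assert (C1 / (C1 + 1) <= 1) by (apply Rle_div_l; lra).
      assert (0 <= C1 / (C1 + 1)) by (apply Rdiv_le_0_compat; lra). nra. }
  split.
  - apply phi_seq_max_exists; [split; [apply Rdiv_lt_0_compat|] | ]; lra.
  - intros r Hmax. apply (blowup_point_of_estimates n r z eps); try (unfold eps; nra); try lra.
    + exact Hmax.
    + apply (sol_max_point_estimates n eps T r z); try (unfold eps; lra); auto.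
Qed.

End ChosenConstants.

Lemma sequence_estimates_all z : 0 < z <= 1 -> eventually (fun n =>
  (exists r, max_point n r) /\ forall r, max_point n r -> blowup_point n r z).
Proof.
  destruct h_bounded as [Hsup HHsup]. destruct f_bounded_near_0 as [Mf0 HMf0].
  destruct (C1_with_Icc_near_0 h h1 Hh h0_pos_seq) as [dh [C1 [Hdh [HC1 HB]]]].
  exact (sequence_estimates Hsup Mf0 dh C1 HHsup HMf0 Hdh HC1 HB z).
Qed.

End SolutionSequence.

End LogConvexNonlinearity.

Theorem lemma3p3
  (h h1 : R -> R) (f f1 f2 : R -> R) (t0 : R)
  (g1 g2 : R -> R) (q : R) (p : Rbar)
  (lam mu : nat -> R) (u u1 u2 : nat -> R -> R)
  (* h : [0,1] -> (0,oo) continuously differentiable *)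
  (Hh : C1_with (Icc 0 1) h h1)
  (Hhpos : forall r, 0 <= r <= 1 -> 0 < h r)
  (* f : [0,oo) -> [0,oo) continuously differentiable *)
  (Hf : C1_with (Ici 0) f f1)
  (Hfnn : forall t, 0 <= t -> 0 <= f t)
  (Ht0 : 0 <= t0)
  (Hfpos : forall t, t0 <= t -> 0 < f t)
  (Hf2 : C2_with (Ici t0) f f1 f2)
  (* g = log f on [t0,oo), with derivatives g1 = g', g2 = g'' *)
  (Hg1 : deriv_within (Ici t0) (fun t => ln (f t)) g1)
  (Hg2 : deriv_within (Ici t0) g1 g2)
  (* condition (H1)(i) *)
  (Hg1pos : forall t, t0 <= t -> 0 < g1 t)
  (Hg2pos : forall t, t0 <= t -> 0 < g2 t)
  (Hqp : (q = 1 /\ Rbar_lt (Finite 0) p) \/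
         (1 < q /\ exists p', p = Finite p' /\ 0 < p'))
  (Hlimq : is_lim (fun t => (g1 t)^2 / (ln (f t) * g2 t)) p_infty (Finite q))
  (Hlimp : is_lim (fun t => t * g1 t / ln (f t)) p_infty p)
  (* condition (H1)(ii) *)
  (Hq1 : q = 1 ->
     (forall s t, t0 <= s -> s <= t ->
        s * g1 s / ln (f s) <= t * g1 t / ln (f t)) /\
     exists (k : nat) (gh gh1 gh2 : R -> R),
       (1 <= k)%nat /\ C2_with (Ici t0) gh gh1 gh2 /\
       (forall t, t0 <= t -> f t = exp_iter k (gh t)) /\
       (forall s t, t0 <= s -> s <= t -> gh1 t / gh t <= gh1 s / gh s))
  (* the sequence of solutions *)
  (Hlam : forall n, 0 < lam n)
  (Hmu : forall n, 0 < mu n)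
  (Hu : forall n, C2_with (Icc 0 1) (u n) (u1 n) (u2 n))
  (Hode : forall n r, 0 < r < 1 ->
     - u2 n r - / r * u1 n r = lam n * h r * f (u n r))
  (Hupos : forall n r, 0 < r < 1 -> 0 < u n r)
  (Hu0 : forall n, u n 0 = mu n)
  (Hu10 : forall n, u1 n 0 = 0)
  (Hu1 : forall n, u n 1 = 0)
  (Hmuinf : is_lim_seq mu p_infty) :
  let gamma0 := fun n => / sqrt (lam n * h 0 * f1 (mu n)) in
  let phi := fun n r => lam n * r ^ 2 * h r * f1 (u n r) in
  let psi := fun n r => - r * g1 (u n r) * u1 n r in
  exists (sigma : nat -> nat) (r1 : nat -> R),
    (forall n, (sigma n < sigma (S n))%nat) /\
    (forall n, 0 < r1 n < 1 /\
       (exists delta, 0 < delta /\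
          forall r, 0 <= r <= 1 -> Rabs (r - r1 n) < delta ->
            t0 <= u (sigma n) r /\ phi (sigma n) r <= phi (sigma n) (r1 n)) /\
       is_derive (phi (sigma n)) (r1 n) 0) /\
    is_lim_seq (fun n => phi (sigma n) (r1 n)) 2 /\
    is_lim_seq (fun n => psi (sigma n) (r1 n)) 2 /\
    is_lim_seq (fun n => r1 n / gamma0 (sigma n)) (2 * sqrt 2) /\
    (exists C, eventually (fun n =>
        Rabs (u (sigma n) (r1 n) - mu (sigma n)) <=
        C * Rabs (/ ln (f (mu (sigma n)))) *
            Rabs (ln (f (mu (sigma n))) / g1 (mu (sigma n))))) /\
    is_lim_seq (fun n => ln (f (u (sigma n) (r1 n))) / ln (f (mu (sigma n)))) 1 /\
    is_lim_seq (fun n => g1 (u (sigma n) (r1 n)) / g1 (mu (sigma n))) 1.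
Proof.
  intros gamma0 phi psi.
  assert (Hq : 1 <= q) by (destruct Hqp as [[-> _] | [Hq _]]; lra).
  pose proof (sequence_estimates_all f f1 f2 g1 g2 t0 Hf2 Hg1 Hg2 Hfpos Hg1pos Hg2pos q h h1 lam mu
    u u1 u2 Hq Hlimq Hh Hhpos Hf Hfnn Ht0 Hlam Hu Hode Hupos Hu0 Hu10 Hu1 Hmuinf) as Hest.
  destruct (Hest 1 ltac:(lra)) as [N0 HN0].
  set (sigma n := (n + N0)%nat).
  destruct (choice (fun n r => max_point f1 h lam mu u (sigma n) r)) as [r1 Hr1].
  { intros n. apply (HN0 (sigma n)). unfold sigma. lia. }
  assert (Hbp : forall z, 0 < z <= 1 ->
    eventually (fun n => blowup_point f f1 g1 t0 h lam mu u u1 (sigma n) (r1 n) z)).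
  { intros z Hz. destruct (Hest z Hz) as [N HN]. exists N. intros n Hn.
    apply (HN (sigma n)); [unfold sigma; lia | apply Hr1]. }
  assert (Hlim : forall (a : nat -> R) (l : R), (forall n z,
    blowup_point f f1 g1 t0 h lam mu u u1 (sigma n) (r1 n) z -> Rabs (a n - l) < z) -> is_lim_seq a l).
  { intros a l Ha. apply is_lim_seq_of_close. intros z Hz.
    eapply filter_imp; [|apply (Hbp z Hz)]. intros n. apply Ha. }
  exists sigma, r1. split; [intros n; unfold sigma; lia|].
  split; [intros n; exact (proj1 (proj2 (HN0 (sigma n) ltac:(unfold sigma; lia)) (r1 n) (Hr1 n)))|].
  repeat split; try apply Hlim.
  - intros n z (_ & H & _). exact H.
  - intros n z (_ & _ & H & _). exact H.
  - intros n z (_ & _ & _ & H & _). exact H.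
  - exists 5. eapply filter_imp; [|apply (Hbp 1 ltac:(lra))]. intros n (_ & _ & _ & _ & H & _). exact H.
  - intros n z (_ & _ & _ & _ & _ & H & _). exact H.
  - intros n z (_ & _ & _ & _ & _ & _ & H). exact H.
Qed.
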